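(* Let $(C,\chi)$ be a Hopf heap and let $\mathrm{Tn}^r C\subseteq\mathrm{End}_{\mathbb{F}}(C)$ be the linear span of all right translations $\tau_a^b$, $a,b\in C$. (1) $\mathrm{Tn}^r C$ is a bialgebra with multiplication the opposite composition, i.e. $\tau_a^b\tau_c^d=\tau_c^d\circ\tau_a^b=\tau_a^{[b,c,d]}$, identity $\mathrm{id}_C$, and (well-defined) coproduct and counit $\Delta(\tau_a^b)=\sum\tau_{a_{(2)}}^{b_{(1)}}\otimes\tau_{a_{(1)}}^{b_{(2)}}$, $\varepsilon(\tau_a^b)=\varepsilon(a)\varepsilon(b)$. (2) If $(C,\chi)$ admits a Grunspan map $\vartheta$, then $\mathrm{Tn}^r C$ is a Hopf algebra with antipode $S(\tau_a^b)=\tau_b^{\vartheta(a)}$. (3) If $f:C\to D$ is a morphism of Hopf heaps, then $\mathrm{Tn}^r f:\mathrm{Tn}^r C\to\mathrm{Tn}^r D$, $\tau_a^b\mapsto\tau_{f(a)}^{f(b)}$, is a (well-defined) bialgebra map, and a Hopf algebra map when both have Grunspan maps. (4) $C\mapsto\mathrm{Tn}^r C$, $f\mapsto\mathrm{Tn}^r f$ is a functor from Hopf heaps to bialgebras (from Hopf heaps with Grunspan maps to Hopf algebras).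
   Context: Work over a field $\mathbb{F}$; coalgebras are coassociative, counital, nonzero, with Sweedler notation; $C^{\mathrm{co}}$ is the co-opposite coalgebra. A Hopf heap is a coalgebra $C$ with a coalgebra map $\chi:C\otimes C^{\mathrm{co}}\otimes C\to C$, $a\otimes b\otimes c\mapsto[a,b,c]$, such that $[[a,b,c],d,e]=[a,b,[c,d,e]]$ and $\sum[c_{(1)},c_{(2)},a]=\sum[a,c_{(1)},c_{(2)}]=\varepsilon(c)a$. A morphism of Hopf heaps is a coalgebra map $f$ with $f([a,b,c])=[f(a),f(b),f(c)]$. The right $(a,b)$-translation is $\tau_a^b:C\to C$, $c\mapsto[c,a,b]$. A Grunspan map is a coalgebra map $\vartheta:C\to C$ with $[[a,b,\vartheta(c)],d,e]=[a,[d,c,b],e]$ for all $a,b,c,d,e$. *)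

(* There is no tensor-product library, so an element of V (x) W is represented
   by a finite list of pairs [(v_i, w_i)] (meaning sum_i v_i (x) w_i), and two
   such representatives are identified iff every pair of linear functionals
   phi : V -> F, psi : W -> F gives the same value sum_i phi v_i * psi w_i.
   Over a field this is exactly equality in V (x) W. *)
From HB Require Import structures.
From mathcomp Require Import all_boot all_order all_algebra.
Set Implicit Arguments. Unset Strict Implicit. Unset Printing Implicit Defensive.
Import GRing.Theory.
Local Open Scope ring_scope.

Fixpoint allP (T : Type) (P : T -> Prop) (s : seq T) : Prop :=
  if s is x :: s' then P x /\ allP P s' else True.

Section HopfHeaps.
Variable F : fieldType.

Definition lfun (V : lmodType F) (phi : V -> F) : Prop :=
  forall (a : F) (x y : V), phi (a *: x + y) = a * phi x + phi y.

Definition lmap (V W : lmodType F) (f : V -> W) : Prop :=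
  forall (a : F) (x y : V), f (a *: x + y) = a *: f x + f y.

Definition teq2 (V W : lmodType F) (s t : seq (V * W)) : Prop :=
  forall (phi : V -> F) (psi : W -> F), lfun phi -> lfun psi ->
    \sum_(p <- s) phi p.1 * psi p.2 = \sum_(p <- t) phi p.1 * psi p.2.

(* (C, d, e) is a (nonzero, coassociative, counital) coalgebra;
   d c represents Delta(c) = sum c_(1) (x) c_(2). *)
Definition coalgebra (C : lmodType F) (d : C -> seq (C * C)) (e : C -> F) : Prop :=
  [/\ (exists c : C, c != 0),
      lfun e,
      (forall (a : F) (x y : C),
         teq2 (d (a *: x + y)) ([seq (a *: p.1, p.2) | p <- d x] ++ d y)),
      (forall (c : C) (phi psi xi : C -> F), lfun phi -> lfun psi -> lfun xi ->
         \sum_(p <- d c) (\sum_(q <- d p.1) phi q.1 * psi q.2) * xi p.2 =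
         \sum_(p <- d c) phi p.1 * (\sum_(q <- d p.2) psi q.1 * xi q.2)) &
      (forall c : C, \sum_(p <- d c) e p.1 *: p.2 = c /\
                     \sum_(p <- d c) e p.2 *: p.1 = c)].

Definition coalg_map (C D : lmodType F) (dC : C -> seq (C * C)) (eC : C -> F)
    (dD : D -> seq (D * D)) (eD : D -> F) (f : C -> D) : Prop :=
  [/\ lmap f,
      (forall c : C, teq2 (dD (f c)) [seq (f p.1, f p.2) | p <- dC c]) &
      (forall c : C, eD (f c) = eC c)].

(* Hopf heap: chi a b c = [a, b, c], a coalgebra map C (x) C^co (x) C -> C *)
Definition hopf_heap (C : lmodType F) (d : C -> seq (C * C)) (e : C -> F)
    (chi : C -> C -> C -> C) : Prop :=
  [/\ coalgebra d e,
      (forall b c : C, lmap (fun a => chi a b c)) /\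
      (forall a c : C, lmap (fun b => chi a b c)) /\
      (forall a b : C, lmap (chi a b)),
      (forall a b c : C,
         teq2 (d (chi a b c))
           [seq (chi p.1 qr.1.2 qr.2.1, chi p.2 qr.1.1 qr.2.2)
              | p <- d a, qr <- [seq (q, r) | q <- d b, r <- d c]]) /\
      (forall a b c : C, e (chi a b c) = e a * e b * e c),
      (forall a b c x y : C, chi (chi a b c) x y = chi a b (chi c x y)) &
      (forall a c : C, \sum_(p <- d c) chi p.1 p.2 a = e c *: a /\
                       \sum_(p <- d c) chi a p.1 p.2 = e c *: a)].

Definition hh_morph (C D : lmodType F) (dC : C -> seq (C * C)) (eC : C -> F)
    (chiC : C -> C -> C -> C) (dD : D -> seq (D * D)) (eD : D -> F)
    (chiD : D -> D -> D -> D) (f : C -> D) : Prop :=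
  coalg_map dC eC dD eD f /\
  forall a b c : C, f (chiC a b c) = chiD (f a) (f b) (f c).

Definition grunspan (C : lmodType F) (d : C -> seq (C * C)) (e : C -> F)
    (chi : C -> C -> C -> C) (th : C -> C) : Prop :=
  coalg_map d e d e th /\
  forall a b c x y : C, chi (chi a b (th c)) x y = chi a (chi x c b) y.

Definition feq (T U : Type) (x y : T -> U) : Prop := forall c, x c = y c.
Definition fcomb (T : Type) (V : lmodType F) (a : F) (x y : T -> V) : T -> V :=
  fun c => a *: x c + y c.
Definition fscale (T : Type) (V : lmodType F) (a : F) (x : T -> V) : T -> V :=
  fun c => a *: x c.
Definition Tmul (T : Type) (x y : T -> T) : T -> T := fun c => y (x c).
Definition Tone (T : Type) : T -> T := fun c => c.

Definition tau (C : lmodType F) (chi : C -> C -> C -> C) (a b : C) : C -> C :=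
  fun c => chi c a b.

Definition inTn (C : lmodType F) (chi : C -> C -> C -> C) (x : C -> C) : Prop :=
  exists s : seq (F * C * C),
    forall c, x c = \sum_(t <- s) t.1.1 *: tau chi t.1.2 t.2 c.

Definition lin_on (C : lmodType F) (P : (C -> C) -> Prop) (phi : (C -> C) -> F) : Prop :=
  (forall x y, P x -> feq x y -> phi x = phi y) /\
  (forall a x y, P x -> P y -> phi (fcomb a x y) = a * phi x + phi y).

Definition teqT (C : lmodType F) (P : (C -> C) -> Prop)
    (s t : seq ((C -> C) * (C -> C))) : Prop :=
  forall phi psi, lin_on P phi -> lin_on P psi ->
    \sum_(p <- s) phi p.1 * psi p.2 = \sum_(p <- t) phi p.1 * psi p.2.

Definition bialgebra_on (C : lmodType F) (P : (C -> C) -> Prop)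
    (dT : (C -> C) -> seq ((C -> C) * (C -> C))) (eT : (C -> C) -> F) : Prop :=
  [/\
      (forall a x y, P x -> P y -> P (fcomb a x y)) /\ P (@Tone C) /\
      (forall x y, P x -> P y -> P (Tmul x y)),
      (forall a x x' y, P x -> P x' -> P y ->
         feq (Tmul (fcomb a x x') y) (fcomb a (Tmul x y) (Tmul x' y)) /\
         feq (Tmul y (fcomb a x x')) (fcomb a (Tmul y x) (Tmul y x'))) /\
      (forall x y z, P x -> P y -> P z -> feq (Tmul (Tmul x y) z) (Tmul x (Tmul y z))) /\
      (forall x, P x -> feq (Tmul (@Tone C) x) x /\ feq (Tmul x (@Tone C)) x),
      (forall x, P x -> allP (fun p => P p.1 /\ P p.2) (dT x)) /\
      (forall x y, P x -> feq x y -> teqT P (dT x) (dT y)) /\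
      (forall a x y, P x -> P y ->
         teqT P (dT (fcomb a x y)) ([seq (fscale a p.1, p.2) | p <- dT x] ++ dT y)) /\
      lin_on P eT,
      (forall x phi psi xi, P x -> lin_on P phi -> lin_on P psi -> lin_on P xi ->
         \sum_(p <- dT x) (\sum_(q <- dT p.1) phi q.1 * psi q.2) * xi p.2 =
         \sum_(p <- dT x) phi p.1 * (\sum_(q <- dT p.2) psi q.1 * xi q.2)) /\
      (forall x, P x ->
         feq (fun c => \sum_(p <- dT x) eT p.1 *: p.2 c) x /\
         feq (fun c => \sum_(p <- dT x) eT p.2 *: p.1 c) x) &
      (forall x y, P x -> P y ->
         teqT P (dT (Tmul x y)) [seq (Tmul p.1 q.1, Tmul p.2 q.2) | p <- dT x, q <- dT y]) /\
      teqT P (dT (@Tone C)) [:: (@Tone C, @Tone C)] /\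
      (forall x y, P x -> P y -> eT (Tmul x y) = eT x * eT y) /\
      eT (@Tone C) = 1].

Definition antipode_on (C : lmodType F) (P : (C -> C) -> Prop)
    (dT : (C -> C) -> seq ((C -> C) * (C -> C))) (eT : (C -> C) -> F)
    (S : (C -> C) -> (C -> C)) : Prop :=
  [/\ forall x, P x -> P (S x),
      forall x y, P x -> feq x y -> feq (S x) (S y),
      forall a x y, P x -> P y -> feq (S (fcomb a x y)) (fcomb a (S x) (S y)) &
      forall x, P x ->
        feq (fun c => \sum_(p <- dT x) Tmul (S p.1) p.2 c) (fun c => eT x *: c) /\
        feq (fun c => \sum_(p <- dT x) Tmul p.1 (S p.2) c) (fun c => eT x *: c)].

Definition Tn_coalg_spec (C : lmodType F) (dC : C -> seq (C * C)) (eC : C -> F)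
    (chi : C -> C -> C -> C)
    (dT : (C -> C) -> seq ((C -> C) * (C -> C))) (eT : (C -> C) -> F) : Prop :=
  [/\ forall x, inTn chi x -> allP (fun p => inTn chi p.1 /\ inTn chi p.2) (dT x),
      forall x y, inTn chi x -> feq x y -> teqT (inTn chi) (dT x) (dT y),
      forall a x y, inTn chi x -> inTn chi y ->
        teqT (inTn chi) (dT (fcomb a x y)) ([seq (fscale a p.1, p.2) | p <- dT x] ++ dT y),
      lin_on (inTn chi) eT &
      (forall a b : C, teqT (inTn chi) (dT (tau chi a b))
                        [seq (tau chi p.2 q.1, tau chi p.1 q.2) | p <- dC a, q <- dC b]) /\
      (forall a b : C, eT (tau chi a b) = eC a * eC b)].

Definition Tn_antipode_spec (C : lmodType F) (chi : C -> C -> C -> C) (th : C -> C)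
    (S : (C -> C) -> (C -> C)) : Prop :=
  [/\ forall x, inTn chi x -> inTn chi (S x),
      forall x y, inTn chi x -> feq x y -> feq (S x) (S y),
      forall a x y, inTn chi x -> inTn chi y -> feq (S (fcomb a x y)) (fcomb a (S x) (S y)) &
      forall a b : C, feq (S (tau chi a b)) (tau chi b (th a))].

Definition Tn_map_spec (C D : lmodType F) (chiC : C -> C -> C -> C) (chiD : D -> D -> D -> D)
    (f : C -> D) (T : (C -> C) -> (D -> D)) : Prop :=
  [/\ forall x, inTn chiC x -> inTn chiD (T x),
      forall x y, inTn chiC x -> feq x y -> feq (T x) (T y),
      forall a x y, inTn chiC x -> inTn chiC y -> feq (T (fcomb a x y)) (fcomb a (T x) (T y)) &
      forall a b : C, feq (T (tau chiC a b)) (tau chiD (f a) (f b))].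

(* T is a bialgebra map (it is linear by Tn_map_spec) *)
Definition bialg_map (C D : lmodType F) (PC : (C -> C) -> Prop) (PD : (D -> D) -> Prop)
    (dTC : (C -> C) -> seq ((C -> C) * (C -> C))) (eTC : (C -> C) -> F)
    (dTD : (D -> D) -> seq ((D -> D) * (D -> D))) (eTD : (D -> D) -> F)
    (T : (C -> C) -> (D -> D)) : Prop :=
  [/\ forall x y, PC x -> PC y -> feq (T (Tmul x y)) (Tmul (T x) (T y)),
      feq (T (@Tone C)) (@Tone D),
      forall x, PC x -> teqT PD (dTD (T x)) [seq (T p.1, T p.2) | p <- dTC x] &
      forall x, PC x -> eTD (T x) = eTC x].

End HopfHeaps.

From Pilot Require Import Defs.
From mathcomp Require Import all_boot all_order all_algebra.
From mathcomp Require classical_sets.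
From Stdlib Require Import Classical ClassicalEpsilon.
From mathcomp Require Import ring.
Import GRing.Theory.
Local Open Scope ring_scope.
Set Implicit Arguments. Unset Strict Implicit. Unset Printing Implicit Defensive.

(* The structure maps exist
   because every x in Tn^r C has the canonical form x = sum tau_{z(1)}^{x(z(2))};
   each axiom is checked on translations, where it is a Hopf heap
   computation, and extended by (bi)linearity. *)

Lemma allP_In (T : Type) (P : T -> Prop) (l : seq T) :
  Defs.allP P l <-> (forall x, List.In x l -> P x).
Proof.
elim: l => [|x l IH] /=; first by split.
split; first by move=> [Px /IH Hl] y [<-|/Hl].
by move=> H; split; [apply: H; left | apply/IH => y Hy; apply: H; right].
Qed.

Lemma allP_impl (T : Type) (P Q : T -> Prop) (l : seq T) :
  (forall x, P x -> Q x) -> Defs.allP P l -> Defs.allP Q l.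
Proof. by move=> PQ; elim: l => //= x l IH [Px Pl]; split; [apply: PQ | apply: IH]. Qed.

Lemma allP_map (T U : Type) (P : U -> Prop) (f : T -> U) (l : seq T) :
  (forall x, P (f x)) -> Defs.allP P (map f l).
Proof. by move=> H; elim: l => //= x l IH; split. Qed.

Lemma allP_flatten (T : Type) (P : T -> Prop) (ss : seq (seq T)) :
  (forall l, List.In l ss -> Defs.allP P l) -> Defs.allP P (flatten ss).
Proof.
elim: ss => [|l ss IH] //= H; apply/allP_In => x /List.in_app_iff [Hx|Hx].
  by move/allP_In: (H l (or_introl erefl)); apply.
by move/allP_In: (IH (fun l' Hl' => H l' (or_intror Hl'))); apply.
Qed.

Lemma eq_big_allP (T : Type) (R : nmodType) (P : T -> Prop) (l : seq T) (f g : T -> R) :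
  (forall i, P i -> f i = g i) -> Defs.allP P l ->
  \sum_(i <- l) f i = \sum_(i <- l) g i.
Proof.
move=> H; elim: l => [|x l IH] /=; first by rewrite !big_nil.
by move=> [Px Pl]; rewrite !big_cons H // IH.
Qed.

Lemma eq_big_In (T : Type) (R : nmodType) (l : seq T) (f g : T -> R) :
  (forall i, List.In i l -> f i = g i) -> \sum_(i <- l) f i = \sum_(i <- l) g i.
Proof. by move=> H; apply: (eq_big_allP H); apply/allP_In. Qed.

Lemma In_mem (T : eqType) (x : T) (s : seq T) : List.In x s -> x \in s.
Proof. by elim: s => [|y s IH] //= [->|/IH]; rewrite inE ?eqxx // => ->; rewrite orbT. Qed.

Lemma In_flatten (T : Type) (x : T) (l : seq T) (ss : seq (seq T)) :
  List.In x l -> List.In l ss -> List.In x (flatten ss).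
Proof.
elim: ss => [|l' ss IH] //= Hx [E|Hl]; apply/List.in_app_iff; first by left; rewrite E.
by right; apply: IH.
Qed.

Section LinearAlgebra.
Variable F : fieldType.

Section LinearMaps.
Variables (V W U : lmodType F).

Lemma lfun0 (phi : V -> F) : lfun phi -> phi 0 = 0.
Proof.
move=> Hphi; have := Hphi 1 0 0; rewrite scaler0 add0r mul1r.
by move/(congr1 (fun t => t - phi 0)); rewrite subrr addrK.
Qed.

Lemma lfunD (phi : V -> F) x y : lfun phi -> phi (x + y) = phi x + phi y.
Proof. by move=> Hphi; rewrite -[x in LHS]scale1r Hphi mul1r. Qed.

Lemma lfunZ (phi : V -> F) a x : lfun phi -> phi (a *: x) = a * phi x.
Proof. by move=> Hphi; rewrite -[_ *: _]addr0 Hphi (lfun0 Hphi) addr0. Qed.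

Lemma lfunB (phi : V -> F) x y : lfun phi -> phi (x - y) = phi x - phi y.
Proof. by move=> Hphi; rewrite lfunD // -scaleN1r lfunZ // mulN1r. Qed.

Lemma lfun_sum (phi : V -> F) I (l : seq I) (f : I -> V) : lfun phi ->
  phi (\sum_(i <- l) f i) = \sum_(i <- l) phi (f i).
Proof.
move=> Hphi; elim: l => [|i l IH]; first by rewrite !big_nil lfun0.
by rewrite !big_cons lfunD // IH.
Qed.

Lemma lmap0 (f : V -> W) : lmap f -> f 0 = 0.
Proof.
move=> Hf; have := Hf 1 0 0; rewrite scaler0 add0r scale1r.
by move/(congr1 (fun t => t - f 0)); rewrite subrr addrK.
Qed.

Lemma lmapD (f : V -> W) x y : lmap f -> f (x + y) = f x + f y.
Proof. by move=> Hf; rewrite -[x in LHS]scale1r Hf scale1r. Qed.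

Lemma lmapZ (f : V -> W) a x : lmap f -> f (a *: x) = a *: f x.
Proof. by move=> Hf; rewrite -[_ *: _]addr0 Hf (lmap0 Hf) addr0. Qed.

Lemma lmapB (f : V -> W) x y : lmap f -> f (x - y) = f x - f y.
Proof. by move=> Hf; rewrite lmapD // -scaleN1r lmapZ // scaleN1r. Qed.

Lemma lmap_sum (f : V -> W) I (l : seq I) (g : I -> V) : lmap f ->
  f (\sum_(i <- l) g i) = \sum_(i <- l) f (g i).
Proof.
move=> Hf; elim: l => [|i l IH]; first by rewrite !big_nil lmap0.
by rewrite !big_cons lmapD // IH.
Qed.

Lemma lfun_comp (phi : W -> F) (f : V -> W) :
  lfun phi -> lmap f -> lfun (fun x => phi (f x)).
Proof. by move=> Hphi Hf a x y; rewrite Hf Hphi. Qed.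

Lemma lmap_comp (g : V -> W) (h : W -> U) :
  lmap g -> lmap h -> lmap (fun x => h (g x)).
Proof. by move=> Hg Hh a x y; rewrite Hg Hh. Qed.

Lemma lmap_sum_fun I (l : seq I) (G : I -> V -> W) :
  (forall i, lmap (G i)) -> lmap (fun x => \sum_(i <- l) G i x).
Proof.
move=> HG a x y; rewrite scaler_sumr -big_split; apply: eq_bigr => i _ /=.
by rewrite HG.
Qed.

End LinearMaps.

(* The
   functional is built from a maximal subspace avoiding the vector (Zorn). *)
Section Separation.
Variables (V : lmodType F) (w : V).
Hypothesis w_neq0 : w != 0.

Definition comb_closed (A : V -> Prop) :=
  forall a x y, A x -> A y -> A (a *: x + y).

Definition subspace (A : V -> Prop) := A 0 /\ comb_closed A.

Lemma subspaceB (A : V -> Prop) x y : subspace A -> A x -> A y -> A (x - y).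
Proof. by move=> [_ HA] Ax Ay; rewrite addrC -scaleN1r; apply: HA. Qed.

Lemma subspaceZ (A : V -> Prop) a x : subspace A -> A x -> A (a *: x).
Proof. by move=> [A0 HA] Ax; rewrite -[_ *: _]addr0; apply: HA. Qed.

(* Zorn's lemma applies to comb-closed sets (the empty union of a chain is
   comb-closed); adjoining 0 to a maximal one gives a maximal subspace. *)
Lemma max_subspace_avoiding : exists A : V -> Prop,
  [/\ subspace A, ~ A w &
      forall B, subspace B -> (forall x, A x -> B x) -> ~ B w -> forall x, B x -> A x].
Proof.
pose P (A : classical_sets.set V) := comb_closed A /\ ~ A w.
have [A [[Acl Aw] Amax]] : exists A, P A /\ (forall B, classical_sets.proper A B -> ~ P B).
  apply: classical_sets.Zorn_bigcup => G GP Gtot; split.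
  - move=> a x y [X GX Xx] [Y GY Yy].
    have [XY|YX] := Gtot _ _ GX GY.
    + by exists Y => //; apply: (proj1 (GP _ GY)) => //; apply: XY.
    + by exists X => //; apply: (proj1 (GP _ GX)) => //; apply: YX.
  - by move=> [X GX Xw]; apply: (proj2 (GP _ GX)).
exists (fun y => A y \/ y = 0); split.
- split; first by right.
  move=> a x y [Ax|->] [Ay|->].
  + by left; apply: Acl.
  + have A0 : A 0 by rewrite -(addNr x) -scaleN1r; apply: Acl.
    by left; rewrite addr0 -[_ *: _]addr0; apply: Acl.
  + by rewrite scaler0 add0r; left.
  + by rewrite scaler0 addr0; right.
- by move=> [//|/eqP]; rewrite (negPf w_neq0).
- move=> B [_ Bcl] AB Bw x Bx; left; apply: NNPP => Ax.
  apply: (Amax B); last by split.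
  by split=> [y Ay|BA]; [apply: AB; left | apply: Ax; apply: BA].
Qed.

Section MaximalSubspace.
Variable A : V -> Prop.
Hypotheses (A_sub : subspace A) (A_w : ~ A w).
Hypothesis A_max :
  forall B, subspace B -> (forall x, A x -> B x) -> ~ B w -> forall x, B x -> A x.

Lemma hyperplane_coord x : exists a, A (x - a *: w).
Proof.
apply: NNPP => Hn.
have Hx a : ~ A (x - a *: w) by move=> Ha; apply: Hn; exists a.
pose B y := exists a u, A u /\ y = u + a *: x.
have B_sub : subspace B.
  split; first by exists 0, 0; split; [case: A_sub | rewrite scale0r addr0].
  move=> a y1 y2 [b1 [u1 [Hu1 ->]]] [b2 [u2 [Hu2 ->]]].
  exists (a * b1 + b2), (a *: u1 + u2); split; first by case: A_sub => _; apply.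
  by rewrite scalerDr scalerDl scalerA addrACA.
have B_w : ~ B w.
  move=> [b [u [Hu wE]]]; have [b0|b0] := eqVneq b 0.
    by apply: A_w; move: wE; rewrite b0 scale0r addr0 => ->.
  apply: (Hx b^-1); rewrite wE scalerDr scalerA mulVf // scale1r.
  by rewrite opprD addrCA subrr addr0 -scaleNr; apply: subspaceZ.
apply: (Hx 0); rewrite scale0r subr0; apply: (A_max B_sub) => //.
  by move=> y Ay; exists 0, y; rewrite scale0r addr0.
by exists 1, 0; split; [case: A_sub | rewrite scale1r add0r].
Qed.

Lemma hyperplane_coord_uniq x a b : A (x - a *: w) -> A (x - b *: w) -> a = b.
Proof.
move=> Ha Hb; apply: NNPP => ab.
have := subspaceZ ((a - b)^-1) A_sub (subspaceB A_sub Hb Ha).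
have -> : x - b *: w - (x - a *: w) = (a - b) *: w.
  by rewrite opprD opprK addrACA subrr add0r addrC -scalerBl.
by rewrite scalerA mulVf ?scale1r // subr_eq0; apply/eqP.
Qed.

End MaximalSubspace.

Lemma separating_functional : exists psi : V -> F, lfun psi /\ psi w = 1.
Proof.
have [A [A_sub A_w A_max]] := max_subspace_avoiding.
pose psi x := proj1_sig (constructive_indefinite_description _
                           (hyperplane_coord A_sub A_w A_max x)).
have psiP x : A (x - psi x *: w).
  by rewrite /psi; case: constructive_indefinite_description.
exists psi; split.
- move=> a x y; apply: (@hyperplane_coord_uniq _ A_sub A_w (a *: x + y)); first exact: psiP.
  have := proj2 A_sub a _ _ (psiP x) (psiP y).
  by rewrite scalerBr scalerA addrACA -opprD -scalerDl.
- apply: (@hyperplane_coord_uniq _ A_sub A_w w); first exact: psiP.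
  by rewrite scale1r subrr; apply: (proj1 A_sub).
Qed.

End Separation.

Lemma lfun_separates (V : lmodType F) (x y : V) :
  (forall psi, lfun psi -> psi x = psi y) -> x = y.
Proof.
move=> H; apply/eqP; rewrite -subr_eq0; apply/negPn/negP.
move/separating_functional => [psi [Hpsi]].
by rewrite lfunB // H // subrr => /eqP; rewrite eq_sym oner_eq0.
Qed.


Definition proj_by (V : lmodType F) (L : seq ((V -> F) * V)) (x : V) : V :=
  \sum_(q <- L) q.1 x *: q.2.

Lemma proj_by_lin (V : lmodType F) (L : seq ((V -> F) * V)) :
  Defs.allP (fun q => lfun q.1) L -> lmap (proj_by L).
Proof.
rewrite /proj_by; elim: L => [|q L IH] /=.
  by move=> _ a x y; rewrite !big_nil scaler0 addr0.
move=> [Hq HL] a x y; rewrite !big_cons IH // Hq scalerDl scalerDr -scalerA.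
by rewrite addrACA.
Qed.

(* Every finite family of vectors lies in the range of a finite rank linear
   projection; it is built by adding one vector at a time, using a
   separating functional for the component outside the current range. *)
Lemma finite_projection (V : lmodType F) (vs : seq V) :
  exists L : seq ((V -> F) * V),
    Defs.allP (fun q => lfun q.1) L /\ (forall x, x \in vs -> proj_by L x = x).
Proof.
suff [L [HL Hfix Hvs]] : exists L : seq ((V -> F) * V),
    [/\ Defs.allP (fun q => lfun q.1) L, Defs.allP (fun q => proj_by L q.2 = q.2) L &
        forall x, x \in vs -> proj_by L x = x] by exists L.
elim: vs => [|v vs [L [HL Hfix Hvs]]]; first by exists [::].
have Hlin := proj_by_lin HL.
have proj_idem x : proj_by L (proj_by L x) = proj_by L x.
  rewrite {2 3}/proj_by lmap_sum //.
  by apply: eq_big_allP Hfix => q Hq; rewrite lmapZ // Hq.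
set w := v - proj_by L v.
have [w0|w0] := eqVneq w 0.
  exists L; split=> // x; rewrite inE => /orP[/eqP->|/Hvs //].
  by apply/eqP; rewrite eq_sym -subr_eq0 -/w w0.
have [psi0 [Hpsi0 psi0w]] := separating_functional w0.
pose psi x := psi0 (x - proj_by L x).
have Hpsi : lfun psi.
  apply: lfun_comp => // a x y; rewrite Hlin scalerBr.
  by rewrite opprD addrACA.
have pw : proj_by L w = 0 by rewrite /w (lmapB _ _ Hlin) proj_idem subrr.
have psi_fix x : proj_by L x = x -> psi x = 0.
  by move=> Hx; rewrite /psi Hx subrr lfun0.
have proj_cons x : proj_by ((psi, w) :: L) x = psi x *: w + proj_by L x.
  by rewrite /proj_by big_cons.
exists ((psi, w) :: L); split; first by split.
  split; first by rewrite /= proj_cons /psi pw subr0 psi0w scale1r addr0.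
  by apply: allP_impl Hfix => q Hq; rewrite proj_cons Hq psi_fix // scale0r add0r.
move=> x; rewrite inE => /orP[/eqP->|/Hvs Hx].
  by rewrite proj_cons /psi -/w psi0w scale1r /w subrK.
by rewrite proj_cons Hx psi_fix // scale0r add0r.
Qed.

Lemma finite_expansion (V : lmodType F) (vs : seq V) :
  exists L : seq ((V -> F) * V),
    Defs.allP (fun q => lfun q.1) L /\
    forall g : V -> F, lfun g -> forall x, x \in vs -> g x = \sum_(q <- L) q.1 x * g q.2.
Proof.
have [L [HL Hproj]] := finite_projection vs; exists L; split => // g Hg x Hx.
rewrite -{1}(Hproj x Hx) /proj_by lfun_sum //; apply: eq_bigr => q _.
by rewrite lfunZ.
Qed.

Lemma finite_expansion_In (V : lmodType F) T (l : seq T) (h : T -> V) :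
  exists L : seq ((V -> F) * V),
    Defs.allP (fun q => lfun q.1) L /\
    forall g : V -> F, lfun g -> forall i, List.In i l -> g (h i) = \sum_(q <- L) q.1 (h i) * g q.2.
Proof.
have [L [HL HE]] := finite_expansion (map h l); exists L; split => // g Hg i Hi.
by apply: HE => //; apply: In_mem; apply: List.in_map.
Qed.

Lemma teq2_sum (V W : lmodType F) (s t : seq (V * W)) (B : V -> W -> F) :
  teq2 s t -> (forall y, lfun (fun x => B x y)) -> (forall x, lfun (B x)) ->
  \sum_(p <- s) B p.1 p.2 = \sum_(p <- t) B p.1 p.2.
Proof.
move=> Hst HB1 HB2.
have [L [HL HE]] := finite_expansion_In (s ++ t) (fun p => p.1).
have expand l : (forall p, List.In p l -> List.In p (s ++ t)) ->
    \sum_(p <- l) B p.1 p.2 = \sum_(q <- L) \sum_(p <- l) q.1 p.1 * B q.2 p.2.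
  move=> Hl; rewrite exchange_big; apply: eq_big_In => p pl.
  exact: (HE (fun x => B x p.2) (HB1 p.2) p (Hl p pl)).
rewrite !expand; first (apply: eq_big_allP HL => q Hq; exact: Hst).
- by move=> p pt; apply: List.in_or_app; right.
- by move=> p ps; apply: List.in_or_app; left.
Qed.

Lemma teq2_sumV (V W U : lmodType F) (s t : seq (V * W)) (B : V -> W -> U) :
  teq2 s t -> (forall y, lmap (fun x => B x y)) -> (forall x, lmap (B x)) ->
  \sum_(p <- s) B p.1 p.2 = \sum_(p <- t) B p.1 p.2.
Proof.
move=> Hst HB1 HB2; apply: lfun_separates => psi Hpsi; rewrite !lfun_sum //.
apply: (teq2_sum (B := fun x y => psi (B x y))) => //.
- by move=> y; apply: lfun_comp.
- by move=> x; apply: lfun_comp.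
Qed.

End LinearAlgebra.

Section HopfHeapFacts.
Variable F : fieldType.
Variables (C : lmodType F) (d : C -> seq (C * C)) (e : C -> F) (chi : C -> C -> C -> C).
Hypothesis HH : hopf_heap d e chi.

Lemma counit_lin : lfun e. Proof. by case: HH => [[]]. Qed.

Lemma comul_lin a x y : teq2 (d (a *: x + y)) ([seq (a *: p.1, p.2) | p <- d x] ++ d y).
Proof. by case: HH => [[]]. Qed.

Lemma coassoc c (phi psi xi : C -> F) : lfun phi -> lfun psi -> lfun xi ->
  \sum_(p <- d c) (\sum_(q <- d p.1) phi q.1 * psi q.2) * xi p.2 =
  \sum_(p <- d c) phi p.1 * (\sum_(q <- d p.2) psi q.1 * xi q.2).
Proof. by case: HH => [[_ _ _ H _]] _ _ _ _; apply: H. Qed.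

Lemma counitL c : \sum_(p <- d c) e p.1 *: p.2 = c.
Proof. by case: HH => [[_ _ _ _ H]] _ _ _ _; case: (H c). Qed.

Lemma counitR c : \sum_(p <- d c) e p.2 *: p.1 = c.
Proof. by case: HH => [[_ _ _ _ H]] _ _ _ _; case: (H c). Qed.

Lemma chi_lin1 b c : lmap (fun a => chi a b c). Proof. by case: HH => _ [H _]. Qed.
Lemma chi_lin2 a c : lmap (fun b => chi a b c). Proof. by case: HH => _ [_ [H _]]. Qed.
Lemma chi_lin3 a b : lmap (chi a b). Proof. by case: HH => _ [_ [_ H]]. Qed.

Lemma chi_comul a b c : teq2 (d (chi a b c))
  [seq (chi p.1 qr.1.2 qr.2.1, chi p.2 qr.1.1 qr.2.2)
     | p <- d a, qr <- [seq (q, r) | q <- d b, r <- d c]].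
Proof. by case: HH => _ _ []. Qed.

Lemma chi_counit a b c : e (chi a b c) = e a * e b * e c.
Proof. by case: HH => _ _ []. Qed.

Lemma chi_assoc a b c x y : chi (chi a b c) x y = chi a b (chi c x y).
Proof. by case: HH. Qed.

Lemma chi_cancelL a c : \sum_(p <- d c) chi p.1 p.2 a = e c *: a.
Proof. by case: HH => _ _ _ _ /(_ a c) []. Qed.

Lemma chi_cancelR a c : \sum_(p <- d c) chi a p.1 p.2 = e c *: a.
Proof. by case: HH => _ _ _ _ /(_ a c) []. Qed.

(* A coalgebra is nonzero, so by counitality some element has counit 1;
   such an element stands in for the missing unit of the heap. *)
Lemma exists_counit_one : exists z, e z = 1.
Proof.
case: HH => [[[c c_neq0] He _ _ Hcounit]] _ _ _ _.
have [p [_ ep_neq0]] : exists p, p \in d c /\ e p.1 != 0.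
  apply: NNPP => Hn; move: c_neq0; case: (Hcounit c) => <- _.
  rewrite big1_seq ?eqxx // => p /andP[_ pin].
  have [->|ep_neq0] := eqVneq (e p.1) 0; first by rewrite scale0r.
  by exfalso; apply: Hn; exists p.
exists ((e p.1)^-1 *: p.1); by rewrite (lfunZ _ _ He) mulVf.
Qed.

Lemma comul_bilin (B : C -> C -> F) :
  (forall y, lfun (fun x => B x y)) -> (forall x, lfun (B x)) ->
  lfun (fun y => \sum_(p <- d y) B p.1 p.2).
Proof.
move=> HB1 HB2 a x y /=; rewrite (teq2_sum (comul_lin a x y) HB1 HB2) big_cat big_map /=.
by rewrite mulr_sumr; congr (_ + _); apply: eq_bigr => p _; rewrite (lfunZ _ _ (HB1 _)).
Qed.

Lemma swap_sum4 (R : nmodType) I J K M (P : seq I) (Q : I -> seq J) (L : seq K)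
   (N : seq M) (X : I -> J -> K -> M -> R) :
  \sum_(p <- P) \sum_(q <- Q p) \sum_(l <- L) \sum_(m <- N) X p q l m =
  \sum_(l <- L) \sum_(m <- N) \sum_(p <- P) \sum_(q <- Q p) X p q l m.
Proof.
transitivity (\sum_(p <- P) \sum_(l <- L) \sum_(m <- N) \sum_(q <- Q p) X p q l m).
  apply: eq_bigr => p _; rewrite exchange_big; apply: eq_bigr => l _.
  by rewrite exchange_big.
by rewrite exchange_big; apply: eq_bigr => l _; rewrite exchange_big.
Qed.

(* Coassociativity, stated for products of three functionals, holds for any
   trilinear form: expand the outer arguments in finitely many coordinates. *)
Lemma coassoc_trilin c (g : C -> C -> C -> F) :
  (forall y w, lfun (fun x => g x y w)) -> (forall x w, lfun (fun y => g x y w)) ->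
  (forall x y, lfun (g x y)) ->
  \sum_(p <- d c) \sum_(q <- d p.1) g q.1 q.2 p.2 =
  \sum_(p <- d c) \sum_(q <- d p.2) g p.1 q.1 q.2.
Proof.
move=> h1 h2 h3.
set xs := [seq q.1 | p <- d c, q <- d p.1] ++ [seq p.1 | p <- d c].
set ws := [seq p.2 | p <- d c] ++ [seq q.2 | p <- d c, q <- d p.2].
have [L [HL EL]] := finite_expansion xs; have [M [HM EM]] := finite_expansion ws.
have expand x y w : x \in xs -> w \in ws ->
    g x y w = \sum_(l <- L) \sum_(m <- M) l.1 x * (m.1 w * g l.2 y m.2).
  move=> Hx Hw; rewrite (EL _ (h1 y w) x Hx); apply: eq_bigr => l _.
  by rewrite (EM _ (h3 l.2 y) w Hw) mulr_sumr.
transitivity (\sum_(l <- L) \sum_(m <- M) \sum_(p <- d c)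
     (\sum_(q <- d p.1) l.1 q.1 * g l.2 q.2 m.2) * m.1 p.2).
  transitivity (\sum_(p <- d c) \sum_(q <- d p.1) \sum_(l <- L) \sum_(m <- M)
      l.1 q.1 * (m.1 p.2 * g l.2 q.2 m.2)).
    apply: eq_big_seq => p pin; apply: eq_big_seq => q qin; apply: expand.
    - by rewrite mem_cat; apply/orP; left; apply/flatten_mapP; exists p => //; apply: map_f.
    - by rewrite mem_cat map_f.
  rewrite swap_sum4; do 3![apply: eq_bigr => ? _]; rewrite big_distrl /=.
  by apply: eq_bigr => q _; ring.
transitivity (\sum_(l <- L) \sum_(m <- M) \sum_(p <- d c)
     l.1 p.1 * (\sum_(q <- d p.2) g l.2 q.1 m.2 * m.1 q.2)).
  apply: eq_big_allP HL => l Hl; apply: eq_big_allP HM => m Hm.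
  exact: (coassoc c Hl (h2 l.2 m.2) Hm).
apply/esym; transitivity (\sum_(p <- d c) \sum_(q <- d p.2) \sum_(l <- L) \sum_(m <- M)
      l.1 p.1 * (m.1 q.2 * g l.2 q.1 m.2)).
  apply: eq_big_seq => p pin; apply: eq_big_seq => q qin; apply: expand.
  - by rewrite mem_cat map_f ?orbT.
  - by rewrite mem_cat; apply/orP; right; apply/flatten_mapP; exists p => //; apply: map_f.
rewrite swap_sum4; do 3![apply: eq_bigr => ? _]; rewrite big_distrr /=.
by apply: eq_bigr => q _; ring.
Qed.

Lemma contract_middle (A B : C -> C -> F) (a0 : F) z :
  (forall y, lfun (fun x => A x y)) -> (forall x, lfun (A x)) ->
  (forall y, lfun (fun x => B x y)) -> (forall x, lfun (B x)) ->
  (forall y, \sum_(m <- d y) A m.1 m.2 = e y * a0) ->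
  \sum_(r <- d z) \sum_(p <- d r.1) \sum_(q <- d r.2) A p.2 q.1 * B p.1 q.2 =
  a0 * \sum_(r <- d z) B r.1 r.2.
Proof.
move=> A1 A2 B1 B2 HA.
rewrite (@coassoc_trilin z (fun x1 x2 y => \sum_(q <- d y) A x2 q.1 * B x1 q.2)).
- rewrite mulr_sumr; apply: eq_bigr => r _ /=.
  rewrite -(@coassoc_trilin r.2 (fun x y w => A x y * B r.1 w)) /=.
  + transitivity (\sum_(p <- d r.2) a0 * (e p.1 * B r.1 p.2)).
      by apply: eq_bigr => p _; rewrite -big_distrl /= HA mulrA [a0 * _]mulrC.
    rewrite -mulr_sumr; congr (_ * _).
    rewrite -{2}(counitL r.2) (lfun_sum _ _ (B2 r.1)); apply: eq_bigr => p _.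
    by rewrite lfunZ.
  + by move=> y w a x x'; rewrite A1 mulrDl mulrA.
  + by move=> x w a y y'; rewrite A2 mulrDl mulrA.
  + by move=> x y a w w'; rewrite B2 mulrDr mulrCA.
- move=> y w a x x' /=; rewrite mulr_sumr -big_split /=; apply: eq_bigr => q _.
  by rewrite B1 mulrDr mulrCA.
- move=> x w a y y' /=; rewrite mulr_sumr -big_split /=; apply: eq_bigr => q _.
  by rewrite A1 mulrDl mulrA.
- move=> x y; apply: (@comul_bilin (fun u v => A y u * B x v)) => [w|v] a u u' /=.
  + by rewrite A2 mulrDl mulrA.
  + by rewrite B2 mulrDr mulrCA.
Qed.

End HopfHeapFacts.

Section TranslationSpan.
Variable F : fieldType.
Variables (C : lmodType F) (d : C -> seq (C * C)) (e : C -> F) (chi : C -> C -> C -> C).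
Hypothesis HH : hopf_heap d e chi.
Notation Tn := (inTn chi).

Definition tcomb (s : seq (F * C * C)) : C -> C :=
  fun c => \sum_(t <- s) t.1.1 *: tau chi t.1.2 t.2 c.

Definition comul_tau (a b : C) : seq ((C -> C) * (C -> C)) :=
  [seq (tau chi p.2 q.1, tau chi p.1 q.2) | p <- d a, q <- d b].

Definition pair2 (T : Type) (l : seq (T * T)) (phi psi : T -> F) : F :=
  \sum_(p <- l) phi p.1 * psi p.2.

Lemma inTn_tcomb s : Tn (tcomb s). Proof. by exists s. Qed.

Lemma inTn_tau a b : Tn (tau chi a b).
Proof. by exists [:: (1, a, b)] => c; rewrite big_cons big_nil addr0 scale1r. Qed.

Lemma inTn_feq x y : Tn x -> feq x y -> Tn y.
Proof. by move=> [s Hs] Hxy; exists s => c; rewrite -Hxy. Qed.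

Lemma inTn_fcomb a x y : Tn x -> Tn y -> Tn (fcomb a x y).
Proof.
move=> [s Hs] [s' Hs']; exists ([seq (a * t.1.1, t.1.2, t.2) | t <- s] ++ s') => c.
rewrite /fcomb Hs Hs' big_cat big_map scaler_sumr; congr (_ + _).
by apply: eq_bigr => t _; rewrite scalerA.
Qed.

Lemma inTn_zero : Tn (fun _ => 0).
Proof. by exists [::] => c; rewrite big_nil. Qed.

Lemma comul_tau_inTn a b : Defs.allP (fun p => Tn p.1 /\ Tn p.2) (comul_tau a b).
Proof.
apply: allP_flatten => l /List.in_map_iff [p [<- _]].
by apply: allP_map => q; split; apply: inTn_tau.
Qed.

Lemma pair2_comul_tau a b phi psi : pair2 (comul_tau a b) phi psi =
  \sum_(p <- d a) \sum_(q <- d b) phi (tau chi p.2 q.1) * psi (tau chi p.1 q.2).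
Proof. by rewrite /pair2 /comul_tau big_allpairs_dep. Qed.

Lemma inTn_lin x : Tn x -> lmap x.
Proof.
move=> [s Hs] a u v; rewrite !Hs scaler_sumr -big_split; apply: eq_bigr => t _ /=.
by rewrite /tau (chi_lin1 HH) scalerDr !scalerA mulrC.
Qed.

Lemma inTn_chi x c y w : Tn x -> x (chi c y w) = chi c y (x w).
Proof.
move=> [s Hs]; rewrite !Hs (lmap_sum _ _ (chi_lin3 HH c y)).
by apply: eq_bigr => t _; rewrite /tau (chi_assoc HH) (lmapZ _ _ (chi_lin3 HH c y)).
Qed.

Lemma inTn_Tmul x y : Tn x -> Tn y -> Tn (Tmul x y).
Proof.
move=> [s Hs] Py; exists [seq (t.1.1, t.1.2, y t.2) | t <- s] => c.
rewrite /Tmul Hs (lmap_sum _ _ (inTn_lin Py)) big_map; apply: eq_bigr => t _.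
by rewrite (lmapZ _ _ (inTn_lin Py)) /tau inTn_chi.
Qed.

Lemma Tmul_tau a b c' d' : feq (Tmul (tau chi a b) (tau chi c' d')) (tau chi a (chi b c' d')).
Proof. by move=> c; rewrite /Tmul /tau (chi_assoc HH). Qed.

Lemma Tmul_tcomb s s' : feq (Tmul (tcomb s) (tcomb s'))
  (tcomb [seq (t.1.1 * t'.1.1, t.1.2, chi t.2 t'.1.2 t'.2) | t <- s, t' <- s']).
Proof.
move=> c; rewrite /Tmul /tcomb big_allpairs_dep /=.
under eq_bigr do rewrite /tau (lmap_sum _ _ (chi_lin1 HH _ _)) scaler_sumr.
rewrite exchange_big; apply: eq_bigr => t _; apply: eq_bigr => t' _ /=.
by rewrite (lmapZ _ _ (chi_lin1 HH _ _)) (chi_assoc HH) scalerA mulrC.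
Qed.

(* The identity is a translation combination: id = sum tau_{z(1)}^{z(2)}
   for any z with e(z) = 1, by the Mal'cev identity. *)
Lemma Tone_tcomb z : e z = 1 -> feq (@Tone C) (tcomb [seq (1, p.1, p.2) | p <- d z]).
Proof.
move=> ez c; rewrite /tcomb big_map /Tone /=.
by under eq_bigr do rewrite scale1r; rewrite /tau (chi_cancelR HH) ez scale1r.
Qed.

Lemma inTn_one : Tn (@Tone C).
Proof.
have [z ez] := exists_counit_one HH.
exact: inTn_feq (inTn_tcomb _) (fun c => esym (Tone_tcomb ez c)).
Qed.

Lemma Tn_extend (V : lmodType F) (Q : (C -> C) -> V) :
  (forall x y, Tn x -> feq x y -> Q x = Q y) ->
  (forall a x y, Tn x -> Tn y -> Q (fcomb a x y) = a *: Q x + Q y) ->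
  forall s, Q (tcomb s) = \sum_(t <- s) t.1.1 *: Q (tau chi t.1.2 t.2).
Proof.
move=> Qfeq Qlin; elim=> [|t s IH].
  have E : Q (fcomb 1 (tcomb [::]) (tcomb [::])) = Q (tcomb [::]).
    apply: Qfeq; first by apply: inTn_fcomb; apply: inTn_tcomb.
    by move=> c; rewrite /fcomb /tcomb !big_nil scaler0 addr0.
  move: E; rewrite Qlin ?scale1r ?big_nil; try exact: inTn_tcomb.
  by move/(congr1 (fun r => r - Q (tcomb [::]))); rewrite addrK subrr.
have E : feq (tcomb (t :: s)) (fcomb t.1.1 (tau chi t.1.2 t.2) (tcomb s)).
  by move=> c; rewrite /tcomb big_cons.
rewrite (Qfeq _ _ (inTn_tcomb _) E) Qlin ?IH ?big_cons //; first exact: inTn_tau.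
exact: inTn_tcomb.
Qed.

Lemma Tn_extendF (Q : (C -> C) -> F) :
  (forall x y, Tn x -> feq x y -> Q x = Q y) ->
  (forall a x y, Tn x -> Tn y -> Q (fcomb a x y) = a * Q x + Q y) ->
  forall s, Q (tcomb s) = \sum_(t <- s) t.1.1 * Q (tau chi t.1.2 t.2).
Proof. exact: (@Tn_extend F^o). Qed.


Lemma lin_on_feq phi x y : lin_on Tn phi -> Tn x -> feq x y -> phi x = phi y.
Proof. by move=> [H _]; apply: H. Qed.

Lemma lin_on_tcomb phi s : lin_on Tn phi ->
  phi (tcomb s) = \sum_(t <- s) t.1.1 * phi (tau chi t.1.2 t.2).
Proof. by move=> [H1 H2]; apply: Tn_extendF. Qed.

Lemma lin_on_scale phi a x : lin_on Tn phi -> Tn x -> phi (fscale a x) = a * phi x.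
Proof.
move=> Hphi Tx; have phi0 : phi (fun _ => 0) = 0.
  rewrite (lin_on_feq Hphi inTn_zero (y := tcomb [::])) ?lin_on_tcomb ?big_nil //.
  by move=> c; rewrite /tcomb big_nil.
case: (Hphi) => H1 H2; rewrite -(H1 (fcomb a x (fun _ => 0))).
- by rewrite H2 ?phi0 ?addr0 //; exact: inTn_zero.
- by apply: inTn_fcomb => //; exact: inTn_zero.
- by move=> c; rewrite /fcomb /fscale addr0.
Qed.

Lemma lin_on_eval (alpha : C -> F) u : lfun alpha -> lin_on Tn (fun f => alpha (f u)).
Proof. by move=> Ha; split=> [x y _ ->|a x y _ _] //; rewrite /fcomb Ha. Qed.

Lemma lin_on_tau_up phi a : lin_on Tn phi -> lfun (fun b => phi (tau chi a b)).
Proof.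
move=> [H1 H2] r x y; rewrite -H2; try exact: inTn_tau.
by apply: H1; [exact: inTn_tau | move=> c; rewrite /fcomb /tau (chi_lin3 HH)].
Qed.

Lemma lin_on_tau_low phi b : lin_on Tn phi -> lfun (fun a => phi (tau chi a b)).
Proof.
move=> [H1 H2] r x y; rewrite -H2; try exact: inTn_tau.
by apply: H1; [exact: inTn_tau | move=> c; rewrite /fcomb /tau (chi_lin2 HH)].
Qed.

Lemma lin_on_TmulL phi g : lin_on Tn phi -> Tn g -> lin_on Tn (fun f => phi (Tmul f g)).
Proof.
move=> [H1 H2] Tg; split.
  by move=> x y Tx Hxy; apply: H1; [exact: inTn_Tmul | move=> c; rewrite /Tmul Hxy].
move=> a x y Tx Ty; rewrite -H2; try exact: inTn_Tmul.
apply: H1; first by apply: inTn_Tmul => //; exact: inTn_fcomb.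
by move=> c; rewrite /Tmul /fcomb (inTn_lin Tg).
Qed.

Lemma lin_on_TmulR phi g : lin_on Tn phi -> Tn g -> lin_on Tn (fun f => phi (Tmul g f)).
Proof.
move=> [H1 H2] Tg; split.
  by move=> x y Tx Hxy; apply: H1; [exact: inTn_Tmul | move=> c; rewrite /Tmul Hxy].
move=> a x y Tx Ty; rewrite -H2; try exact: inTn_Tmul.
by apply: H1; [apply: inTn_Tmul => //; exact: inTn_fcomb | move=> c].
Qed.

Lemma pair2_comul_tau_lin phi psi a : lin_on Tn phi -> lin_on Tn psi ->
  lfun (fun b => pair2 (comul_tau a b) phi psi).
Proof.
move=> Hphi Hpsi r x y /=; rewrite !pair2_comul_tau mulr_sumr -big_split.
apply: eq_bigr => p _ /=.
rewrite (@comul_bilin _ _ _ _ _ HH (fun v w => phi (tau chi p.2 v) * psi (tau chi p.1 w))) //.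
- by move=> w r' v v'; rewrite (lin_on_tau_up _ Hphi) mulrDl mulrA.
- by move=> v r' w w'; rewrite (lin_on_tau_up _ Hpsi) mulrDr mulrCA.
Qed.

Lemma lin_on_ext phi psi : (forall x, phi x = psi x) -> lin_on Tn phi -> lin_on Tn psi.
Proof. by move=> E [H1 H2]; split=> *; rewrite -!E; [apply: H1 | apply: H2]. Qed.

Lemma lin_on_mulr phi k : lin_on Tn phi -> lin_on Tn (fun x => phi x * k).
Proof.
move=> [H1 H2]; split=> [x y Tx Hxy|a x y Tx Ty]; first by rewrite (H1 x y).
by rewrite H2 // mulrDl mulrA.
Qed.

Lemma lin_on_mull phi k : lin_on Tn phi -> lin_on Tn (fun x => k * phi x).
Proof. by move=> Hphi; apply: lin_on_ext (lin_on_mulr k Hphi) => x; rewrite mulrC. Qed.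

Lemma lin_on_sum I (P : I -> Prop) (l : seq I) (Q : I -> (C -> C) -> F) :
  Defs.allP P l -> (forall i, P i -> lin_on Tn (Q i)) ->
  lin_on Tn (fun x => \sum_(i <- l) Q i x).
Proof.
move=> Hl HQ; split=> [x y Tx Hxy|a x y Tx Ty].
  by apply: eq_big_allP Hl => i Pi; case: (HQ i Pi) => H _; apply: H.
rewrite mulr_sumr -big_split; apply: eq_big_allP Hl => i Pi /=.
by case: (HQ i Pi) => _ H; apply: H.
Qed.

Lemma Tn_extend2 (Q1 Q2 : (C -> C) -> (C -> C) -> F) :
  (forall y, Tn y -> lin_on Tn (fun x => Q1 x y)) ->
  (forall y, Tn y -> lin_on Tn (fun x => Q2 x y)) ->
  (forall x, Tn x -> lin_on Tn (Q1 x)) -> (forall x, Tn x -> lin_on Tn (Q2 x)) ->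
  (forall a b a' b', Q1 (tau chi a b) (tau chi a' b') = Q2 (tau chi a b) (tau chi a' b')) ->
  forall x y, Tn x -> Tn y -> Q1 x y = Q2 x y.
Proof.
move=> H1l H2l H1r H2r Htau x y Tx Ty.
have [s Hx] := Tx; have [s' Hy] := Ty.
rewrite (lin_on_feq (H1l y Ty) Tx Hx) (lin_on_feq (H2l y Ty) Tx Hx).
rewrite (lin_on_tcomb s (H1l y Ty)) (lin_on_tcomb s (H2l y Ty)).
apply: eq_bigr => t _; congr (_ * _).
have [H1 H2] := (H1r _ (inTn_tau t.1.2 t.2), H2r _ (inTn_tau t.1.2 t.2)).
rewrite (lin_on_feq H1 Ty Hy) (lin_on_feq H2 Ty Hy) (lin_on_tcomb s' H1) (lin_on_tcomb s' H2).
by apply: eq_bigr => t' _; rewrite Htau.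
Qed.

End TranslationSpan.

Section CoproductSpec.
Variable F : fieldType.
Variables (C : lmodType F) (d : C -> seq (C * C)) (e : C -> F) (chi : C -> C -> C -> C).
Variables (dT : (C -> C) -> seq ((C -> C) * (C -> C))) (eT : (C -> C) -> F).
Hypothesis Hspec : Tn_coalg_spec d e chi dT eT.
Notation Tn := (inTn chi).
Notation comul_tau := (comul_tau d chi).
Notation tcomb := (tcomb chi).

Lemma dT_inTn x : Tn x -> Defs.allP (fun p => Tn p.1 /\ Tn p.2) (dT x).
Proof. by case: Hspec => H _ _ _ _; apply: H. Qed.

Lemma dT_feq x y phi psi : lin_on Tn phi -> lin_on Tn psi -> Tn x -> feq x y ->
  pair2 (dT x) phi psi = pair2 (dT y) phi psi.
Proof. by case: Hspec => _ H _ _ _ Hphi Hpsi Tx Hxy; apply: H. Qed.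

Lemma dT_tau a b phi psi : lin_on Tn phi -> lin_on Tn psi ->
  pair2 (dT (tau chi a b)) phi psi = pair2 (comul_tau a b) phi psi.
Proof. by case: Hspec => _ _ _ _ [H _] Hphi Hpsi; apply: H. Qed.

Lemma eT_tau a b : eT (tau chi a b) = e a * e b.
Proof. by case: Hspec => _ _ _ _ []. Qed.

Lemma eT_lin : lin_on Tn eT.
Proof. by case: Hspec. Qed.

Lemma pair2_dT_lin phi psi : lin_on Tn phi -> lin_on Tn psi ->
  lin_on Tn (fun f => pair2 (dT f) phi psi).
Proof.
move=> Hphi Hpsi; case: (Hspec) => H1 H2 H3 _ _; split.
  by move=> x y Tx Hxy; apply: H2.
move=> a x y Tx Ty; rewrite /pair2 (H3 a x y Tx Ty phi psi Hphi Hpsi) big_cat big_map /=.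
congr (_ + _); rewrite mulr_sumr; apply: eq_big_allP (H1 x Tx) => p [Tp1 Tp2].
by rewrite (lin_on_scale _ Hphi Tp1) mulrA.
Qed.

Lemma dT_tcomb s phi psi : lin_on Tn phi -> lin_on Tn psi ->
  pair2 (dT (tcomb s)) phi psi = \sum_(t <- s) t.1.1 * pair2 (comul_tau t.1.2 t.2) phi psi.
Proof.
move=> Hphi Hpsi; case: (pair2_dT_lin Hphi Hpsi) => H1 H2.
rewrite (Tn_extendF (Q := fun f => pair2 (dT f) phi psi)) //.
by apply: eq_bigr => t _; rewrite dT_tau.
Qed.

Lemma eT_tcomb s : eT (tcomb s) = \sum_(t <- s) t.1.1 * (e t.1.2 * e t.2).
Proof. by rewrite (lin_on_tcomb s eT_lin); apply: eq_bigr => t _; rewrite eT_tau. Qed.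

(* The termwise computation extends to forms beta(p(1) u, p(2)) that are
   linear in a vector of C rather than in p(1) itself: expand beta in
   finitely many coordinates of C. *)
Lemma dT_eval_first x s u (beta : C -> (C -> C) -> F) : Tn x -> feq x (tcomb s) ->
  (forall y, lin_on Tn (beta y)) -> (forall g, lfun (fun y => beta y g)) ->
  \sum_(p <- dT x) beta (p.1 u) p.2 =
  \sum_(t <- s) t.1.1 * \sum_(p <- comul_tau t.1.2 t.2) beta (p.1 u) p.2.
Proof.
move=> Tx Hx Hbeta1 Hbeta2.
set l2 := flatten [seq comul_tau t.1.2 t.2 | t <- s].
have [L [HL EL]] := finite_expansion_In (dT x ++ l2) (fun p => p.1 u).
have expand p : List.In p (dT x ++ l2) ->
    beta (p.1 u) p.2 = \sum_(l <- L) l.1 (p.1 u) * beta l.2 p.2.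
  exact: (EL (fun y => beta y p.2)).
transitivity (\sum_(l <- L) pair2 (dT x) (fun f => l.1 (f u)) (beta l.2)).
  rewrite /pair2 exchange_big; apply: eq_big_In => p Hp.
  by apply: expand; apply: List.in_or_app; left.
transitivity (\sum_(l <- L) \sum_(t <- s) t.1.1 *
                pair2 (comul_tau t.1.2 t.2) (fun f => l.1 (f u)) (beta l.2)).
  apply: eq_big_allP HL => l Hl; have Hev := lin_on_eval chi u Hl.
  by rewrite (dT_feq Hev (Hbeta1 l.2) Tx Hx) (dT_tcomb _ Hev (Hbeta1 l.2)).
rewrite exchange_big; apply: eq_big_In => t Ht; rewrite -mulr_sumr; congr (_ * _).
rewrite /pair2 exchange_big; apply/esym; apply: eq_big_In => p Hp.
apply: expand; apply: List.in_or_app; right; apply: In_flatten Hp _.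
exact: (List.in_map (fun t => comul_tau t.1.2 t.2)).
Qed.

End CoproductSpec.

(* Fix z with
   e(z) = 1.  Every x in Tn^r C has the canonical representation
   x = sum tau_{z(1)}^{x(z(2))}, which depends on x only as a function; the
   structure maps are defined termwise on it. *)
Section CanonicalStructure.
Variable F : fieldType.
Variables (C : lmodType F) (d : C -> seq (C * C)) (e : C -> F) (chi : C -> C -> C -> C).
Hypothesis HH : hopf_heap d e chi.
Notation Tn := (inTn chi).
Notation comul_tau := (comul_tau d chi).
Notation tcomb := (tcomb chi).

Lemma tau_cancel x y : Tn x ->
  feq (tcomb [seq (1, m.1, x m.2) | m <- d y]) (fscale (e y) x).
Proof.
move=> Tx c; rewrite /tcomb /fscale big_map /tau.
under eq_bigr do rewrite scale1r -(inTn_chi HH _ _ _ Tx).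
by rewrite -(lmap_sum _ _ (inTn_lin HH Tx)) (chi_cancelR HH) (lmapZ _ _ (inTn_lin HH Tx)).
Qed.

Lemma lin_on_tau_cancel phi x y : lin_on Tn phi -> Tn x ->
  \sum_(m <- d y) phi (tau chi m.1 (x m.2)) = e y * phi x.
Proof.
move=> Hphi Tx; rewrite -(lin_on_scale _ Hphi Tx).
rewrite -(lin_on_feq Hphi (inTn_tcomb _ _) (tau_cancel y Tx)) lin_on_tcomb // big_map.
by apply: eq_bigr => m _; rewrite mul1r.
Qed.

Variable z : C.
Hypothesis ez : e z = 1.

Definition comul0 (x : C -> C) : seq ((C -> C) * (C -> C)) :=
  flatten [seq comul_tau p.1 (x p.2) | p <- d z].

Definition counit0 (x : C -> C) : F := e (x z).

Lemma pair2_comul0 x (phi psi : (C -> C) -> F) :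
  pair2 (comul0 x) phi psi = \sum_(p <- d z) pair2 (comul_tau p.1 (x p.2)) phi psi.
Proof. by rewrite /pair2 /comul0 big_flatten big_map. Qed.

Lemma comul0_inTn x : Defs.allP (fun p => Tn p.1 /\ Tn p.2) (comul0 x).
Proof.
apply: allP_flatten => l /List.in_map_iff [p [<- _]].
exact: comul_tau_inTn.
Qed.

(* Expand the coproduct of [z(2), a, b], then contract the middle legs of z. *)
Lemma comul0_tau a b phi psi : lin_on Tn phi -> lin_on Tn psi ->
  pair2 (comul0 (tau chi a b)) phi psi = pair2 (comul_tau a b) phi psi.
Proof.
move=> Hphi Hpsi; rewrite pair2_comul0 pair2_comul_tau.
transitivity (\sum_(r <- d z) \sum_(p <- d r.1) \sum_(w <- d r.2)
   \sum_(al <- d a) \sum_(be <- d b)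
   phi (tau chi p.2 (chi w.1 al.2 be.1)) * psi (tau chi p.1 (chi w.2 al.1 be.2))).
  apply: eq_bigr => r _; rewrite pair2_comul_tau; apply: eq_bigr => p _.
  rewrite (teq2_sum (B := fun v w => phi (tau chi p.2 v) * psi (tau chi p.1 w))
                    (chi_comul HH r.2 a b)) /=.
  - by rewrite big_allpairs_dep; apply: eq_bigr => w _; rewrite big_allpairs_dep.
  - by move=> v r' u u'; rewrite (lin_on_tau_up HH _ Hphi) mulrDl mulrA.
  - by move=> u r' v v'; rewrite (lin_on_tau_up HH _ Hpsi) mulrDr mulrCA.
transitivity (\sum_(al <- d a) \sum_(be <- d b) \sum_(r <- d z) \sum_(p <- d r.1)
   \sum_(w <- d r.2)
   phi (tau chi p.2 (chi w.1 al.2 be.1)) * psi (tau chi p.1 (chi w.2 al.1 be.2))).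
  rewrite -swap_sum4; apply: eq_bigr => r _; apply: eq_bigr => p _; rewrite exchange_big.
  by apply: eq_bigr => al _; rewrite exchange_big.
apply: eq_bigr => al _; apply: eq_bigr => be _.
rewrite (@contract_middle _ _ _ _ _ HH (fun u v => phi (tau chi u (chi v al.2 be.1)))
           (fun u v => psi (tau chi u (chi v al.1 be.2))) (phi (tau chi al.2 be.1))).
- by rewrite (lin_on_tau_cancel _ Hpsi (inTn_tau _ _ _)) ez mul1r.
- by move=> v; apply: (lin_on_tau_low HH _ Hphi).
- by move=> u; apply: (lfun_comp (lin_on_tau_up HH u Hphi) (chi_lin1 HH _ _)).
- by move=> v; apply: (lin_on_tau_low HH _ Hpsi).
- by move=> u; apply: (lfun_comp (lin_on_tau_up HH u Hpsi) (chi_lin1 HH _ _)).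
- by move=> y; apply: (lin_on_tau_cancel _ Hphi (inTn_tau _ _ _)).
Qed.

Lemma comul0_spec : Tn_coalg_spec d e chi comul0 counit0.
Proof.
split.
- by move=> x _; apply: comul0_inTn.
- move=> x y _ Hxy phi psi _ _; rewrite /comul0.
  by congr (\sum_(p <- flatten _) _); apply: eq_map => p; rewrite Hxy.
- move=> a x y Tx Ty phi psi Hphi Hpsi.
  rewrite -/(pair2 _ phi psi) pair2_comul0 big_cat big_map /=.
  have -> : \sum_(p <- comul0 x) phi (fscale a p.1) * psi p.2 = a * pair2 (comul0 x) phi psi.
    rewrite /pair2 mulr_sumr; apply: eq_big_allP (comul0_inTn x) => r [Tr1 _].
    by rewrite (lin_on_scale _ Hphi Tr1) mulrA.
  rewrite -/(pair2 (comul0 y) phi psi) !pair2_comul0 mulr_sumr -big_split.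
  by apply: eq_bigr => p _; rewrite /fcomb (pair2_comul_tau_lin HH p.1 Hphi Hpsi).
- split; first by move=> x y _ Hxy; rewrite /counit0 Hxy.
  by move=> a x y _ _; rewrite /counit0 /fcomb (counit_lin HH).
split; first by move=> a b phi psi; apply: comul0_tau.
by move=> a b; rewrite /counit0 /tau (chi_counit HH) ez mul1r.
Qed.

End CanonicalStructure.

(* Each axiom is checked on translations, where it is a
   computation in the Hopf heap, and extended by (bi)linearity. *)
Section Bialgebra.
Variable F : fieldType.
Variables (C : lmodType F) (d : C -> seq (C * C)) (e : C -> F) (chi : C -> C -> C -> C).
Hypothesis HH : hopf_heap d e chi.
Variables (dT : (C -> C) -> seq ((C -> C) * (C -> C))) (eT : (C -> C) -> F).
Hypothesis Hspec : Tn_coalg_spec d e chi dT eT.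
Notation Tn := (inTn chi).
Notation comul_tau := (comul_tau d chi).
Notation tcomb := (tcomb chi).

(* Coassociativity on a translation reduces to coassociativity of C in
   both indices a and b. *)
Lemma coassoc_tau a b phi psi xi : lin_on Tn phi -> lin_on Tn psi -> lin_on Tn xi ->
  pair2 (comul_tau a b) (fun f => pair2 (dT f) phi psi) xi =
  pair2 (comul_tau a b) phi (fun f => pair2 (dT f) psi xi).
Proof.
move=> Hphi Hpsi Hxi; rewrite !pair2_comul_tau.
under eq_bigr do under eq_bigr do rewrite (dT_tau Hspec) // pair2_comul_tau big_distrl /=.
under [RHS]eq_bigr do under eq_bigr do rewrite (dT_tau Hspec) // pair2_comul_tau big_distrr /=.
pose G x1 x2 x3 y1 y2 y3 :=
  phi (tau chi x3 y1) * psi (tau chi x2 y2) * xi (tau chi x1 y3).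
have lin1 := lin_on_tau_low HH; have lin2 := lin_on_tau_up HH.
transitivity (\sum_(p <- d a) \sum_(p' <- d p.2) \sum_(q <- d b) \sum_(q' <- d q.1)
    G p.1 p'.1 p'.2 q'.1 q'.2 q.2).
  apply: eq_bigr => p _; rewrite exchange_big; apply: eq_bigr => q _.
  by apply: eq_bigr => p' _; rewrite big_distrl.
rewrite -(@coassoc_trilin _ _ _ _ _ HH a
  (fun x1 x2 x3 => \sum_(q <- d b) \sum_(q' <- d q.1) G x1 x2 x3 q'.1 q'.2 q.2)).
- apply: eq_bigr => p _; rewrite [RHS]exchange_big; apply: eq_bigr => p' _.
  rewrite (@coassoc_trilin _ _ _ _ _ HH b (fun y1 y2 y3 => G p'.1 p'.2 p.2 y1 y2 y3)).
  + by apply: eq_bigr => q _; rewrite big_distrr /=; apply: eq_bigr => q' _; rewrite /G mulrA.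
  + by move=> y w r u v; rewrite /G (lin2 _ _ Hphi); ring.
  + by move=> u w r y y'; rewrite /G (lin2 _ _ Hpsi); ring.
  + by move=> u y r w w'; rewrite /G (lin2 _ _ Hxi); ring.
- move=> y w r u v /=; rewrite !mulr_sumr -big_split; apply: eq_bigr => q _.
  rewrite !mulr_sumr -big_split; apply: eq_bigr => q' _.
  by rewrite /G (lin1 _ _ Hxi) /=; ring.
- move=> u w r y y' /=; rewrite !mulr_sumr -big_split; apply: eq_bigr => q _.
  rewrite !mulr_sumr -big_split; apply: eq_bigr => q' _.
  by rewrite /G (lin1 _ _ Hpsi) /=; ring.
- move=> u y r w w' /=; rewrite !mulr_sumr -big_split; apply: eq_bigr => q _.
  rewrite !mulr_sumr -big_split; apply: eq_bigr => q' _.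
  by rewrite /G (lin1 _ _ Hphi) /=; ring.
Qed.

Lemma coassocT x phi psi xi : Tn x -> lin_on Tn phi -> lin_on Tn psi -> lin_on Tn xi ->
  \sum_(p <- dT x) (\sum_(q <- dT p.1) phi q.1 * psi q.2) * xi p.2 =
  \sum_(p <- dT x) phi p.1 * (\sum_(q <- dT p.2) psi q.1 * xi q.2).
Proof.
move=> Tx Hphi Hpsi Hxi; have [s Hx] := Tx.
have L1 := pair2_dT_lin Hspec Hphi Hpsi; have L2 := pair2_dT_lin Hspec Hpsi Hxi.
rewrite -/(pair2 _ (fun f => pair2 (dT f) phi psi) xi) -/(pair2 _ phi (fun f => pair2 (dT f) psi xi)).
rewrite (dT_feq Hspec L1 Hxi Tx Hx) (dT_feq Hspec Hphi L2 Tx Hx) !(dT_tcomb Hspec) //.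
by apply: eq_bigr => t _; rewrite coassoc_tau.
Qed.

Lemma counit_tau a b c :
  \sum_(p <- comul_tau a b) eT p.1 *: p.2 c = tau chi a b c /\
  \sum_(p <- comul_tau a b) eT p.2 *: p.1 c = tau chi a b c.
Proof.
rewrite /comul_tau !big_allpairs_dep /=; split.
- rewrite [RHS]/tau -[in RHS](counitR HH a) (lmap_sum _ _ (chi_lin2 HH c b)).
  apply: eq_bigr => p _; rewrite (lmapZ _ _ (chi_lin2 HH c b)) -[in RHS](counitL HH b).
  rewrite (lmap_sum _ _ (chi_lin3 HH c p.1)) scaler_sumr; apply: eq_bigr => q _.
  by rewrite (eT_tau Hspec) (lmapZ _ _ (chi_lin3 HH c p.1)) scalerA /tau.
- rewrite [RHS]/tau -[in RHS](counitL HH a) (lmap_sum _ _ (chi_lin2 HH c b)).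
  apply: eq_bigr => p _; rewrite (lmapZ _ _ (chi_lin2 HH c b)) -[in RHS](counitR HH b).
  rewrite (lmap_sum _ _ (chi_lin3 HH c p.2)) scaler_sumr; apply: eq_bigr => q _.
  by rewrite (eT_tau Hspec) (lmapZ _ _ (chi_lin3 HH c p.2)) scalerA mulrC /tau.
Qed.

Lemma dT_eval_right x s c phi : Tn x -> feq x (tcomb s) -> lin_on Tn phi ->
  \sum_(p <- dT x) phi p.1 *: p.2 c =
  \sum_(t <- s) t.1.1 *: \sum_(p <- comul_tau t.1.2 t.2) phi p.1 *: p.2 c.
Proof.
move=> Tx Hx Hphi; apply: lfun_separates => al Hal; have Hev := lin_on_eval chi c Hal.
rewrite !lfun_sum //; under eq_bigr do rewrite lfunZ //.
rewrite -/(pair2 _ phi (fun f => al (f c))) (dT_feq Hspec Hphi Hev Tx Hx) (dT_tcomb Hspec) //.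
apply: eq_bigr => t _; rewrite lfunZ // lfun_sum //; congr (_ * _).
by apply: eq_bigr => p _; rewrite lfunZ.
Qed.

Lemma dT_eval_left x s c phi : Tn x -> feq x (tcomb s) -> lin_on Tn phi ->
  \sum_(p <- dT x) phi p.2 *: p.1 c =
  \sum_(t <- s) t.1.1 *: \sum_(p <- comul_tau t.1.2 t.2) phi p.2 *: p.1 c.
Proof.
move=> Tx Hx Hphi; apply: lfun_separates => al Hal; have Hev := lin_on_eval chi c Hal.
rewrite !lfun_sum //; under eq_bigr do rewrite lfunZ // mulrC.
rewrite -/(pair2 _ (fun f => al (f c)) phi) (dT_feq Hspec Hev Hphi Tx Hx) (dT_tcomb Hspec) //.
apply: eq_bigr => t _; rewrite lfunZ // lfun_sum //; congr (_ * _).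
by apply: eq_bigr => p _; rewrite lfunZ // mulrC.
Qed.

Lemma counitT x : Tn x ->
  feq (fun c => \sum_(p <- dT x) eT p.1 *: p.2 c) x /\
  feq (fun c => \sum_(p <- dT x) eT p.2 *: p.1 c) x.
Proof.
move=> Tx; have [s Hx] := Tx; have Ht := eT_lin Hspec.
split=> c; rewrite Hx.
- by rewrite (dT_eval_right c Tx Hx Ht); apply: eq_bigr => t _; rewrite (counit_tau _ _ c).1.
- by rewrite (dT_eval_left c Tx Hx Ht); apply: eq_bigr => t _; rewrite (counit_tau _ _ c).2.
Qed.

Lemma comul_tau_mul a b c' d' phi psi : lin_on Tn phi -> lin_on Tn psi ->
  \sum_(p <- comul_tau a b) \sum_(q <- comul_tau c' d') phi (Tmul p.1 q.1) * psi (Tmul p.2 q.2) =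
  pair2 (comul_tau a (chi b c' d')) phi psi.
Proof.
move=> Hphi Hpsi; rewrite pair2_comul_tau /comul_tau big_allpairs_dep; apply: eq_bigr => p _.
rewrite (teq2_sum (B := fun v w => phi (tau chi p.2 v) * psi (tau chi p.1 w)) (chi_comul HH b c' d')) /=.
- rewrite big_allpairs_dep; apply: eq_bigr => w _; rewrite !big_allpairs_dep.
  apply: eq_bigr => g _; apply: eq_bigr => h _ /=.
  by rewrite (lin_on_feq Hphi _ (Tmul_tau HH _ _ _ _)) ?(lin_on_feq Hpsi _ (Tmul_tau HH _ _ _ _)) //;
    apply: (inTn_Tmul HH); apply: inTn_tau.
- by move=> v r u u'; rewrite (lin_on_tau_up HH _ Hphi) mulrDl mulrA.
- by move=> u r v v'; rewrite (lin_on_tau_up HH _ Hpsi) mulrDr mulrCA.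
Qed.

Lemma comulT_mul x y : Tn x -> Tn y ->
  teqT Tn (dT (Tmul x y)) [seq (Tmul p.1 q.1, Tmul p.2 q.2) | p <- dT x, q <- dT y].
Proof.
move=> Tx Ty phi psi Hphi Hpsi; rewrite big_allpairs_dep /=.
have Ldt := pair2_dT_lin Hspec.
move: x y Tx Ty; apply: (Tn_extend2 (Q1 := fun x y => pair2 (dT (Tmul x y)) phi psi)
  (Q2 := fun x y => \sum_(p <- dT x) \sum_(q <- dT y) phi (Tmul p.1 q.1) * psi (Tmul p.2 q.2))).

- by move=> y Ty; apply: (lin_on_TmulL HH (Ldt _ _ Hphi Hpsi) Ty).
- move=> y Ty; pose Q q x := pair2 (dT x) (fun f => phi (Tmul f q.1)) (fun f => psi (Tmul f q.2)).
  apply: (lin_on_ext (phi := fun x => \sum_(q <- dT y) Q q x)).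
    by move=> x; rewrite exchange_big.
  apply: (lin_on_sum (dT_inTn Hspec Ty)) => q [Tq1 Tq2].
  by apply: Ldt; apply: (lin_on_TmulL HH).
- by move=> x Tx; apply: (lin_on_TmulR HH (Ldt _ _ Hphi Hpsi) Tx).
- move=> x Tx; pose Q p y := pair2 (dT y) (fun f => phi (Tmul p.1 f)) (fun f => psi (Tmul p.2 f)).
  apply: (lin_on_sum (Q := Q) (dT_inTn Hspec Tx)) => p [Tp1 Tp2].
  by apply: Ldt; apply: (lin_on_TmulR HH).
move=> a b c' d'.
have Tab := inTn_tau chi a b; have Tcd := inTn_tau chi c' d'.
rewrite (lin_on_feq (Ldt _ _ Hphi Hpsi) (inTn_Tmul HH Tab Tcd) (Tmul_tau HH _ _ _ _)).
rewrite (dT_tau Hspec) // -comul_tau_mul //.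
transitivity (\sum_(p <- comul_tau a b)
    pair2 (dT (tau chi c' d')) (fun f => phi (Tmul p.1 f)) (fun f => psi (Tmul p.2 f))).
  apply: eq_big_allP (comul_tau_inTn d chi a b) => p [Tp1 Tp2].
  by rewrite (dT_tau Hspec) //; apply: (lin_on_TmulR HH).
rewrite /pair2 exchange_big [RHS]exchange_big.
apply: eq_big_allP (dT_inTn Hspec Tcd) => q [Tq1 Tq2].
rewrite -!/(pair2 _ (fun f => phi (Tmul f q.1)) (fun f => psi (Tmul f q.2))).
by rewrite (dT_tau Hspec) //; apply: (lin_on_TmulL HH).
Qed.

(* Delta(1) = 1 (x) 1: write 1 = sum tau_{z(1)}^{z(2)} and contract the
   middle legs of z. *)
Lemma comulT_one : teqT Tn (dT (@Tone C)) [:: (@Tone C, @Tone C)].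
Proof.
move=> phi psi Hphi Hpsi; have [z ez] := exists_counit_one HH.
have Tone_cancel := lin_on_tau_cancel HH _ _ (inTn_one HH).
rewrite big_cons big_nil addr0 -/(pair2 _ phi psi).
rewrite (dT_feq Hspec Hphi Hpsi (inTn_one HH) (Tone_tcomb HH ez)) (dT_tcomb Hspec) // big_map /=.
under eq_bigr do rewrite mul1r pair2_comul_tau.
rewrite (@contract_middle _ _ _ _ _ HH (fun u v => phi (tau chi u v))
           (fun u v => psi (tau chi u v)) (phi (@Tone C))).
- by rewrite (Tone_cancel _ _ Hpsi) ez mul1r.
- by move=> v; apply: (lin_on_tau_low HH _ Hphi).
- by move=> u; apply: (lin_on_tau_up HH u Hphi).
- by move=> v; apply: (lin_on_tau_low HH _ Hpsi).
- by move=> u; apply: (lin_on_tau_up HH u Hpsi).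
- by move=> y; apply: Tone_cancel.
Qed.

Lemma counitT_mul x y : Tn x -> Tn y -> eT (Tmul x y) = eT x * eT y.
Proof.
have Ht := eT_lin Hspec.
move: x y; apply: (Tn_extend2 (Q1 := fun x y => eT (Tmul x y)) (Q2 := fun x y => eT x * eT y)).
- by move=> y Ty; apply: (lin_on_TmulL HH Ht Ty).
- by move=> y Ty; apply: lin_on_mulr.
- by move=> x Tx; apply: (lin_on_TmulR HH Ht Tx).
- by move=> x Tx; apply: lin_on_mull.
move=> a b c' d'.
rewrite (lin_on_feq Ht (inTn_Tmul HH (inTn_tau _ _ _) (inTn_tau _ _ _)) (Tmul_tau HH _ _ _ _)).
by rewrite !(eT_tau Hspec) (chi_counit HH) !mulrA.
Qed.

Lemma counitT_one : eT (@Tone C) = 1.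
Proof.
have [z ez] := exists_counit_one HH.
rewrite (lin_on_feq (eT_lin Hspec) (inTn_one HH) (Tone_tcomb HH ez)) (eT_tcomb Hspec) big_map /=.
rewrite -ez -[in RHS](counitL HH z) (lfun_sum _ _ (counit_lin HH)); apply: eq_bigr => p _.
by rewrite ez mul1r (lfunZ _ _ (counit_lin HH)).
Qed.

Theorem Tn_bialgebra : bialgebra_on Tn dT eT.
Proof.
have [H1 H2 H3 H4 _] := Hspec.
split.
- split; first by move=> a x y; apply: inTn_fcomb.
  by split; [exact: (inTn_one HH) | move=> x y; apply: (inTn_Tmul HH)].
- split; first by move=> a x x' y Tx Tx' Ty; split=> c //; rewrite /Tmul /fcomb (inTn_lin HH Ty).
  by split=> // x Tx; split.
- by split=> //; split.
- by split; [move=> *; apply: coassocT | move=> x Tx; apply: counitT].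
- split; first by move=> x y; apply: comulT_mul.
  by split; [exact: comulT_one | split; [exact: counitT_mul | exact: counitT_one]].
Qed.

End Bialgebra.

Section Antipode.
Variable F : fieldType.
Variables (C : lmodType F) (d : C -> seq (C * C)) (e : C -> F) (chi : C -> C -> C -> C).
Hypothesis HH : hopf_heap d e chi.
Variable th : C -> C.
Hypothesis Hth : grunspan d e chi th.
Notation Tn := (inTn chi).
Notation comul_tau := (comul_tau d chi).
Notation tcomb := (tcomb chi).

Lemma grunspan_chi a b c x y : chi (chi a b (th c)) x y = chi a (chi x c b) y.
Proof. by case: Hth. Qed.

Lemma grunspan_cancel a c : \sum_(p <- d a) chi c p.2 (th p.1) = e a *: c.
Proof.
have [z ez] := exists_counit_one HH.
transitivity (\sum_(p <- d a) \sum_(r <- d z) chi c (chi r.1 p.1 p.2) r.2).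
  apply: eq_bigr => p _; under eq_bigr do rewrite -grunspan_chi.
  by rewrite (chi_cancelR HH) ez scale1r.
rewrite exchange_big /=.
under eq_bigr do rewrite -(lmap_sum _ _ (chi_lin2 HH c _)) (chi_cancelR HH) (lmapZ _ _ (chi_lin2 HH c _)).
by rewrite -scaler_sumr (chi_cancelR HH) ez scale1r.
Qed.

Variable z : C.
Hypothesis ez : e z = 1.

Lemma grunspan_formula c :
  th c = \sum_(q <- d z) \sum_(p <- d z) chi q.1 (chi p.1 c q.2) p.2.
Proof.
rewrite -[th c]scale1r -ez -(chi_cancelL HH); apply: eq_bigr => q _.
by under eq_bigr do rewrite -grunspan_chi; rewrite (chi_cancelR HH) ez scale1r.
Qed.

Definition antipode0 (x : C -> C) : C -> C := fun c => \sum_(p <- d z) chi c (x p.1) p.2.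

Lemma antipode0_spec : Tn_antipode_spec chi th antipode0.
Proof.
split.
- move=> x _; exists [seq (1, x p.1, p.2) | p <- d z] => c.
  by rewrite /antipode0 big_map; apply: eq_bigr => p _; rewrite scale1r.
- by move=> x y _ Hxy c; rewrite /antipode0; apply: eq_bigr => p _; rewrite Hxy.
- move=> a x y _ _ c; rewrite /antipode0 /fcomb scaler_sumr -big_split.
  by apply: eq_bigr => p _; rewrite /= (chi_lin2 HH).
- move=> a b c; rewrite /antipode0 /tau.
  by under eq_bigr do rewrite -grunspan_chi; rewrite (chi_cancelR HH) ez scale1r.
Qed.

Section AnyAntipode.
Variables (dT : (C -> C) -> seq ((C -> C) * (C -> C))) (eT : (C -> C) -> F).
Hypothesis Hspec : Tn_coalg_spec d e chi dT eT.
Variable S : (C -> C) -> (C -> C).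
Hypothesis HS : Tn_antipode_spec chi th S.

Lemma antipode_tau a b : feq (S (tau chi a b)) (tau chi b (th a)).
Proof. by case: HS. Qed.

Lemma antipode_tcomb s c : S (tcomb s) c = \sum_(t <- s) t.1.1 *: chi c t.2 (th t.1.2).
Proof.
case: HS => _ H2 H3 _.
rewrite (Tn_extend (Q := fun f => S f c)).
- by apply: eq_bigr => t _; rewrite antipode_tau.
- by move=> x y Tx Hxy; apply: H2.
- by move=> a x y Tx Ty; rewrite H3.
Qed.

Lemma antipode_rep x s : Tn x -> feq x (tcomb s) ->
  feq (S x) (tcomb [seq (t.1.1, t.2, th t.1.2) | t <- s]).
Proof.
move=> Tx Hx c; case: (HS) => _ H2 _ _.
by rewrite (H2 _ _ Tx Hx c) antipode_tcomb /tcomb big_map.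
Qed.

Lemma antipode_form f c : Tn f -> S f c = \sum_(r <- d z) chi c (f r.1) r.2.
Proof.
move=> Tf; have [s Hf] := Tf; case: (HS) => _ H2 _ _.
rewrite (H2 _ (tcomb s) Tf Hf c) antipode_tcomb.
transitivity (\sum_(r <- d z) chi c (tcomb s r.1) r.2); last first.
  by apply: eq_bigr => r _; rewrite Hf.
rewrite /tcomb; under [RHS]eq_bigr do rewrite (lmap_sum _ _ (chi_lin2 HH c _)).
rewrite exchange_big; apply: eq_bigr => t _.
under [RHS]eq_bigr do rewrite (lmapZ _ _ (chi_lin2 HH c _)) /tau -grunspan_chi.
by rewrite -scaler_sumr (chi_cancelR HH) ez scale1r.
Qed.

Lemma antipode_apply f g c : Tn f -> Tn g ->
  g (S f c) = \sum_(r <- d z) chi c (f r.1) (g r.2).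
Proof.
move=> Tf Tg; rewrite antipode_form // (lmap_sum _ _ (inTn_lin HH Tg)).
by apply: eq_bigr => r _; rewrite (inTn_chi HH).
Qed.

Lemma antipode_tau_left a b c :
  \sum_(q <- comul_tau a b) q.2 (S q.1 c) = (e a * e b) *: c.
Proof.
rewrite /comul_tau big_allpairs_dep /=.
under eq_bigr do under eq_bigr do rewrite antipode_tau /tau grunspan_chi.
rewrite exchange_big /=.
under eq_bigr do rewrite -(lmap_sum _ _ (chi_lin2 HH c _)) (chi_cancelL HH) (lmapZ _ _ (chi_lin2 HH c _)).
by rewrite -scaler_sumr (chi_cancelR HH) scalerA mulrC.
Qed.

Lemma antipode_tau_right a b c :
  \sum_(q <- comul_tau a b) S q.2 (q.1 c) = (e a * e b) *: c.
Proof.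
rewrite /comul_tau big_allpairs_dep /=.
under eq_bigr do under eq_bigr do rewrite antipode_tau /tau (chi_assoc HH).
under eq_bigr do rewrite -(lmap_sum _ _ (chi_lin3 HH c _)) (chi_cancelL HH) (lmapZ _ _ (chi_lin3 HH c _)).
by rewrite -scaler_sumr grunspan_cancel scalerA mulrC.
Qed.

Lemma antipodeT_left x : Tn x ->
  feq (fun c => \sum_(p <- dT x) Tmul (S p.1) p.2 c) (fun c => eT x *: c).
Proof.
move=> Tx c; have [s Hx] := Tx; apply: lfun_separates => al Hal.
pose beta (r : C * C) (y : C) (g : C -> C) := al (chi c y (g r.2)).
have beta_lin r : forall y, lin_on Tn (beta r y).
  move=> y; split; first by move=> f g _ Hfg; rewrite /beta Hfg.
  by move=> a f g _ _; rewrite /beta /fcomb (chi_lin3 HH) Hal.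
have beta_lfun r : forall g, lfun (fun y => beta r y g).
  by move=> g; apply: lfun_comp => //; apply: (chi_lin2 HH).
have S_tcomb (t : F * C * C) : al (\sum_(q <- comul_tau t.1.2 t.2) q.2 (S q.1 c)) =
                 \sum_(r <- d z) \sum_(q <- comul_tau t.1.2 t.2) beta r (q.1 r.1) q.2.
  rewrite lfun_sum // exchange_big; apply: eq_big_allP (comul_tau_inTn d chi _ _) => q [Tq1 Tq2].
  by rewrite antipode_apply // lfun_sum.
rewrite /Tmul lfun_sum // (lin_on_feq (eT_lin Hspec) Tx Hx) (eT_tcomb Hspec) lfunZ // mulr_suml.
transitivity (\sum_(r <- d z) \sum_(p <- dT x) beta r (p.1 r.1) p.2).
  rewrite exchange_big; apply: eq_big_allP (dT_inTn Hspec Tx) => p [Tp1 Tp2].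
  by rewrite antipode_apply // lfun_sum.
under eq_bigr => r _ do rewrite (dT_eval_first Hspec r.1 Tx Hx (beta_lin r) (beta_lfun r)).
rewrite exchange_big; apply: eq_bigr => t _; rewrite -mulr_sumr -S_tcomb.
by rewrite antipode_tau_left (lfunZ _ _ Hal) !mulrA.
Qed.

Lemma antipodeT_right x : Tn x ->
  feq (fun c => \sum_(p <- dT x) Tmul p.1 (S p.2) c) (fun c => eT x *: c).
Proof.
move=> Tx c; have [s Hx] := Tx; apply: lfun_separates => al Hal.
pose beta (y : C) (g : C -> C) := al (\sum_(r <- d z) chi y (g r.1) r.2).
have beta_lin y : lin_on Tn (beta y).
  split; first by move=> f g _ Hfg; congr (al _); apply: eq_bigr => r _; rewrite Hfg.
  move=> a f g _ _; rewrite /beta /fcomb -(lfunZ _ _ Hal) -(lfunD _ _ Hal); congr (al _).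
  by rewrite scaler_sumr -big_split; apply: eq_bigr => r _; rewrite /= (chi_lin2 HH).
have beta_lfun g : lfun (fun y => beta y g).
  apply: lfun_comp => // a u v; rewrite scaler_sumr -big_split.
  by apply: eq_bigr => r _; rewrite (chi_lin1 HH).
rewrite /Tmul lfun_sum // (lin_on_feq (eT_lin Hspec) Tx Hx) (eT_tcomb Hspec) lfunZ // mulr_suml.
transitivity (\sum_(p <- dT x) beta (p.1 c) p.2).
  by apply: eq_big_allP (dT_inTn Hspec Tx) => p [Tp1 Tp2]; rewrite antipode_form.
rewrite (dT_eval_first Hspec c Tx Hx beta_lin beta_lfun); apply: eq_bigr => t _.
rewrite -mulrA; congr (_ * _); rewrite -lfunZ // -antipode_tau_right lfun_sum //.
apply: eq_big_allP (comul_tau_inTn d chi _ _) => q [Tq1 Tq2].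
by rewrite antipode_form.
Qed.

Theorem Tn_antipode : antipode_on Tn dT eT S.
Proof.
case: (HS) => H1 H2 H3 _; split => // x Tx.
by split; [apply: antipodeT_left | apply: antipodeT_right].
Qed.

End AnyAntipode.
End Antipode.

Section TnMap.
Variable F : fieldType.
Variables (C D : lmodType F) (chiC : C -> C -> C -> C) (chiD : D -> D -> D -> D).
Variables (f : C -> D) (T : (C -> C) -> (D -> D)).
Hypothesis HT : Tn_map_spec chiC chiD f T.

Lemma Tmap_rep x s : inTn chiC x -> feq x (tcomb chiC s) ->
  feq (T x) (tcomb chiD [seq (t.1.1, f t.1.2, f t.2) | t <- s]).
Proof.
move=> Tx Hx u; case: (HT) => _ H2 H3 H4; rewrite (H2 _ _ Tx Hx u).
rewrite (Tn_extend (Q := fun g => T g u)).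
- by rewrite /tcomb big_map; apply: eq_bigr => t _; rewrite H4.
- by move=> y y' Ty Hy; apply: H2.
- by move=> a y y' Ty Ty'; rewrite H3.
Qed.

Lemma Tmap_inTn x : inTn chiC x -> inTn chiD (T x).
Proof. by case: HT => H1 _ _ _; apply: H1. Qed.

Lemma Tmap_lin_on phi : lin_on (inTn chiD) phi -> lin_on (inTn chiC) (fun g => phi (T g)).
Proof.
move=> [K1 K2]; case: HT => H1 H2 H3 _; split.
  by move=> x y Tx Hxy; apply: K1; [apply: H1 | apply: H2].
move=> a x y Tx Ty; rewrite -K2; try by apply: H1.
by apply: K1; [apply: H1; apply: inTn_fcomb | apply: H3].
Qed.

End TnMap.

Section Morphism.
Variable F : fieldType.
Variables (C D : lmodType F) (dC : C -> seq (C * C)) (eC : C -> F) (chiC : C -> C -> C -> C).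
Variables (dD : D -> seq (D * D)) (eD : D -> F) (chiD : D -> D -> D -> D).
Hypotheses (HC : hopf_heap dC eC chiC) (HD : hopf_heap dD eD chiD).
Variable f : C -> D.
Hypothesis Hf : hh_morph dC eC chiC dD eD chiD f.

Lemma morph_lin : lmap f. Proof. by case: Hf => [[]]. Qed.
Lemma morph_counit c : eD (f c) = eC c. Proof. by case: Hf => [[]]. Qed.
Lemma morph_chi a b c : f (chiC a b c) = chiD (f a) (f b) (f c). Proof. by case: Hf. Qed.

Lemma morph_comul (U : lmodType F) c (B : D -> D -> U) :
  (forall y, lmap (fun x => B x y)) -> (forall x, lmap (B x)) ->
  \sum_(p <- dD (f c)) B p.1 p.2 = \sum_(p <- dC c) B (f p.1) (f p.2).
Proof. by case: Hf => [[_ H _] _] H1 H2; rewrite (teq2_sumV (H c) H1 H2) big_map. Qed.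

Lemma morph_comulF c (B : D -> D -> F) :
  (forall y, lfun (fun x => B x y)) -> (forall x, lfun (B x)) ->
  \sum_(p <- dD (f c)) B p.1 p.2 = \sum_(p <- dC c) B (f p.1) (f p.2).
Proof. by case: Hf => [[_ H _] _] H1 H2; rewrite (teq2_sum (H c) H1 H2) big_map. Qed.

Variable z : C.
Hypothesis ez : eC z = 1.

(* [u, f z(1), f z(2)] = u, the Mal'cev identity transported along f *)
Lemma morph_cancelR u : \sum_(p <- dC z) chiD u (f p.1) (f p.2) = u.
Proof.
rewrite -(@morph_comul D z (chiD u)); first by rewrite (chi_cancelR HD) morph_counit ez scale1r.
- by move=> y; apply: (chi_lin2 HD).
- by move=> x; apply: (chi_lin3 HD).
Qed.

Definition Tmap0 (x : C -> C) : D -> D := fun u => \sum_(p <- dC z) chiD u (f p.1) (f (x p.2)).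

Lemma Tmap0_spec : Tn_map_spec chiC chiD f Tmap0.
Proof.
split.
- move=> x _; exists [seq (1, f p.1, f (x p.2)) | p <- dC z] => u.
  by rewrite /Tmap0 big_map; apply: eq_bigr => p _; rewrite scale1r.
- by move=> x y _ Hxy u; rewrite /Tmap0; apply: eq_bigr => p _; rewrite Hxy.
- move=> a x y _ _ u; rewrite /Tmap0 /fcomb scaler_sumr -big_split.
  by apply: eq_bigr => p _; rewrite /= morph_lin (chi_lin3 HD).
- move=> a b u; rewrite /Tmap0 /tau.
  under eq_bigr do rewrite morph_chi -(chi_assoc HD).
  by rewrite -(lmap_sum _ _ (chi_lin1 HD _ _)) morph_cancelR.
Qed.

Section AnyTmap.
Variable T : (C -> C) -> (D -> D).
Hypothesis HT : Tn_map_spec chiC chiD f T.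

Lemma Tmap_mul x y : inTn chiC x -> inTn chiC y -> feq (T (Tmul x y)) (Tmul (T x) (T y)).
Proof.
move=> Tx Ty u; have [s Hx] := Tx; have [s' Hy] := Ty.
have E : feq (Tmul x y)
    (tcomb chiC [seq (t.1.1 * t'.1.1, t.1.2, chiC t.2 t'.1.2 t'.2) | t <- s, t' <- s']).
  by move=> c; rewrite -(Tmul_tcomb HC s s' c) /Tmul Hx Hy.
rewrite (Tmap_rep HT (inTn_Tmul HC Tx Ty) E) /Tmul (Tmap_rep HT Tx Hx) (Tmap_rep HT Ty Hy).
rewrite -/(Tmul (tcomb chiD _) (tcomb chiD _) u) (Tmul_tcomb HD).
rewrite /tcomb big_map !big_allpairs_dep big_map; apply: eq_bigr => t _.
by rewrite big_map; apply: eq_bigr => t' _; rewrite /= morph_chi.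
Qed.

Lemma Tmap_one : feq (T (@Tone C)) (@Tone D).
Proof.
move=> u; rewrite (Tmap_rep HT (inTn_one HC) (Tone_tcomb HC ez)) /tcomb /Tone !big_map /=.
by under eq_bigr do rewrite scale1r; rewrite /tau morph_cancelR.
Qed.

Section Comul.
Variables (dTC : (C -> C) -> seq ((C -> C) * (C -> C))) (eTC : (C -> C) -> F).
Variables (dTD : (D -> D) -> seq ((D -> D) * (D -> D))) (eTD : (D -> D) -> F).
Hypotheses (HsC : Tn_coalg_spec dC eC chiC dTC eTC) (HsD : Tn_coalg_spec dD eD chiD dTD eTD).

(* On a translation, Delta(tau_{f a}^{f b}) is the image of Delta(tau_a^b)
   because f is comultiplicative. *)
Lemma Tmap_comul_tau a b phi psi : lin_on (inTn chiD) phi -> lin_on (inTn chiD) psi ->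
  pair2 (comul_tau dD chiD (f a) (f b)) phi psi =
  pair2 (comul_tau dC chiC a b) (fun g => phi (T g)) (fun g => psi (T g)).
Proof.
move=> Hphi Hpsi; rewrite !pair2_comul_tau.
rewrite (@morph_comulF a (fun u v => \sum_(q <- dD (f b)) phi (tau chiD v q.1) * psi (tau chiD u q.2))).
- apply: eq_bigr => p _.
  rewrite (@morph_comulF b (fun u v => phi (tau chiD (f p.2) u) * psi (tau chiD (f p.1) v))).
  + apply: eq_bigr => q _; case: (HT) => H1 _ _ H4.
    by rewrite (lin_on_feq Hphi (H1 _ (inTn_tau _ _ _)) (H4 _ _))
               (lin_on_feq Hpsi (H1 _ (inTn_tau _ _ _)) (H4 _ _)).
  + by move=> y r u v; rewrite (lin_on_tau_up HD _ Hphi) mulrDl mulrA.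
  + by move=> x r u v; rewrite (lin_on_tau_up HD _ Hpsi) mulrDr mulrCA.
- move=> y r u v; rewrite mulr_sumr -big_split; apply: eq_bigr => q _ /=.
  by rewrite (lin_on_tau_low HD _ Hpsi) /=; ring.
- move=> y r u v; rewrite mulr_sumr -big_split; apply: eq_bigr => q _ /=.
  by rewrite (lin_on_tau_low HD _ Hphi) /=; ring.
Qed.

Lemma Tmap_comul x : inTn chiC x ->
  teqT (inTn chiD) (dTD (T x)) [seq (T p.1, T p.2) | p <- dTC x].
Proof.
move=> Tx phi psi Hphi Hpsi; have [s Hx] := Tx.
have L1 := Tmap_lin_on HT Hphi; have L2 := Tmap_lin_on HT Hpsi.
rewrite -/(pair2 _ phi psi) (dT_feq HsD Hphi Hpsi (Tmap_inTn HT Tx) (Tmap_rep HT Tx Hx)).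
rewrite (dT_tcomb HsD _ Hphi Hpsi) big_map big_map.
rewrite -/(pair2 _ (fun g => phi (T g)) (fun g => psi (T g))).
rewrite (dT_feq HsC L1 L2 Tx Hx) (dT_tcomb HsC _ L1 L2).
by apply: eq_bigr => t _; rewrite Tmap_comul_tau.
Qed.

Lemma Tmap_counit x : inTn chiC x -> eTD (T x) = eTC x.
Proof.
move=> Tx; have [s Hx] := Tx.
rewrite (lin_on_feq (eT_lin HsD) (Tmap_inTn HT Tx) (Tmap_rep HT Tx Hx)) (eT_tcomb HsD).
rewrite (lin_on_feq (eT_lin HsC) Tx Hx) (eT_tcomb HsC) big_map.
by apply: eq_bigr => t _; rewrite !morph_counit.
Qed.

Theorem Tmap_bialg_map : bialg_map (inTn chiC) (inTn chiD) dTC eTC dTD eTD T.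
Proof.
split; [exact: Tmap_mul | exact: Tmap_one | exact: Tmap_comul | exact: Tmap_counit].
Qed.

End Comul.

Section Antipodes.
Variables (thC : C -> C) (thD : D -> D) (SC : (C -> C) -> (C -> C)) (SD : (D -> D) -> (D -> D)).
Hypotheses (HthC : grunspan dC eC chiC thC) (HthD : grunspan dD eD chiD thD).
Hypotheses (HSC : Tn_antipode_spec chiC thC SC) (HSD : Tn_antipode_spec chiD thD SD).

(* Morphisms of Hopf heaps intertwine Grunspan maps, since a Grunspan map
   is given by a formula in the heap operations. *)
Lemma morph_grunspan c : f (thC c) = thD (f c).
Proof.
have ez' : eD (f z) = 1 by rewrite morph_counit.
rewrite (grunspan_formula HC HthC ez c) (grunspan_formula HD HthD ez' (f c)).
rewrite (lmap_sum _ _ morph_lin).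
rewrite (@morph_comul D z (fun u v => \sum_(p <- dD (f z)) chiD u (chiD p.1 (f c) v) p.2)).
- apply: eq_bigr => q _; rewrite (lmap_sum _ _ morph_lin).
  rewrite (@morph_comul D z (fun u v => chiD (f q.1) (chiD u (f c) (f q.2)) v)).
  + by apply: eq_bigr => p _; rewrite !morph_chi.
  + move=> y; apply: (lmap_comp (g := fun x => chiD x (f c) (f q.2)) (h := fun w => chiD (f q.1) w y)).
    * exact: (chi_lin1 HD).
    * exact: (chi_lin2 HD).
  + by move=> x; apply: (chi_lin3 HD).
- by move=> y; apply: lmap_sum_fun => p; apply: (chi_lin1 HD).
- move=> x; apply: lmap_sum_fun => p.
  apply: (lmap_comp (g := fun v => chiD p.1 (f c) v) (h := fun w => chiD x w p.2)).
  + exact: (chi_lin3 HD).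
  + exact: (chi_lin2 HD).
Qed.

Lemma Tmap_antipode x : inTn chiC x -> feq (T (SC x)) (SD (T x)).
Proof.
move=> Tx u; have [s Hx] := Tx.
have TSx : inTn chiC (SC x) by case: HSC => H1 _ _ _; apply: H1.
rewrite (Tmap_rep HT TSx (antipode_rep HSC Tx Hx)).
rewrite (antipode_rep HSD (Tmap_inTn HT Tx) (Tmap_rep HT Tx Hx)).
by rewrite /tcomb !big_map; apply: eq_bigr => t _; rewrite /= morph_grunspan.
Qed.

End Antipodes.
End AnyTmap.
End Morphism.

(* Part (4): functoriality.  By [Tmap_rep], Tn^r f is determined on
   Tn^r C by f, whence Tn^r id = id and Tn^r (g o f) = Tn^r g o Tn^r f. *)
Lemma Tmap_id (F : fieldType) (C : lmodType F) (chi : C -> C -> C -> C)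
    (T : (C -> C) -> (C -> C)) :
  Tn_map_spec chi chi id T -> forall x, inTn chi x -> feq (T x) x.
Proof.
move=> HT x Tx u; have [s Hx] := Tx.
by rewrite (Tmap_rep HT Tx Hx) Hx /tcomb big_map.
Qed.

Lemma Tmap_comp (F : fieldType) (C D E : lmodType F) (chiC : C -> C -> C -> C)
    (chiD : D -> D -> D -> D) (chiE : E -> E -> E -> E) (f : C -> D) (g : D -> E)
    (Tf : (C -> C) -> (D -> D)) (Tg : (D -> D) -> (E -> E)) (Tgf : (C -> C) -> (E -> E)) :
  Tn_map_spec chiC chiD f Tf -> Tn_map_spec chiD chiE g Tg ->
  Tn_map_spec chiC chiE (fun c => g (f c)) Tgf ->
  forall x, inTn chiC x -> feq (Tgf x) (Tg (Tf x)).
Proof.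
move=> HTf HTg HTgf x Tx u; have [s Hx] := Tx.
rewrite (Tmap_rep HTgf Tx Hx) (Tmap_rep HTg (Tmap_inTn HTf Tx) (Tmap_rep HTf Tx Hx)).
by rewrite /tcomb !big_map.
Qed.

Theorem mainTheorem3 (F : fieldType) :
  (* (1) Tn^r C is a bialgebra with the given (well-defined) structure *)
  (forall (C : lmodType F) (dC : C -> seq (C * C)) (eC : C -> F) (chi : C -> C -> C -> C),
     hopf_heap dC eC chi ->
     (exists (dT : (C -> C) -> seq ((C -> C) * (C -> C))) (eT : (C -> C) -> F),
        Tn_coalg_spec dC eC chi dT eT) /\
     (forall dT eT, Tn_coalg_spec dC eC chi dT eT -> bialgebra_on (inTn chi) dT eT)) /\
  (* (2) with a Grunspan map, Tn^r C is a Hopf algebra, S(tau_a^b) = tau_b^{th a} *)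
  (forall (C : lmodType F) (dC : C -> seq (C * C)) (eC : C -> F) (chi : C -> C -> C -> C)
          (th : C -> C),
     hopf_heap dC eC chi -> grunspan dC eC chi th ->
     (exists S : (C -> C) -> (C -> C), Tn_antipode_spec chi th S) /\
     (forall dT eT S, Tn_coalg_spec dC eC chi dT eT -> Tn_antipode_spec chi th S ->
        antipode_on (inTn chi) dT eT S)) /\
  (* (3) Tn^r f is a well-defined bialgebra map, Hopf algebra map with Grunspan maps *)
  (forall (C D : lmodType F) (dC : C -> seq (C * C)) (eC : C -> F) (chiC : C -> C -> C -> C)
          (dD : D -> seq (D * D)) (eD : D -> F) (chiD : D -> D -> D -> D) (f : C -> D),
     hopf_heap dC eC chiC -> hopf_heap dD eD chiD -> hh_morph dC eC chiC dD eD chiD f ->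
     (exists T : (C -> C) -> (D -> D), Tn_map_spec chiC chiD f T) /\
     (forall T dTC eTC dTD eTD, Tn_map_spec chiC chiD f T ->
        Tn_coalg_spec dC eC chiC dTC eTC -> Tn_coalg_spec dD eD chiD dTD eTD ->
        bialg_map (inTn chiC) (inTn chiD) dTC eTC dTD eTD T) /\
     (forall T thC thD SC SD, Tn_map_spec chiC chiD f T ->
        grunspan dC eC chiC thC -> grunspan dD eD chiD thD ->
        Tn_antipode_spec chiC thC SC -> Tn_antipode_spec chiD thD SD ->
        forall x, inTn chiC x -> feq (T (SC x)) (SD (T x)))) /\
  (* (4) functoriality: Tn^r id = id, Tn^r (g o f) = Tn^r g o Tn^r f *)
  (forall (C : lmodType F) (dC : C -> seq (C * C)) (eC : C -> F) (chi : C -> C -> C -> C)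
          (T : (C -> C) -> (C -> C)),
     hopf_heap dC eC chi -> Tn_map_spec chi chi id T ->
     forall x, inTn chi x -> feq (T x) x) /\
  (forall (C D E : lmodType F)
          (dC : C -> seq (C * C)) (eC : C -> F) (chiC : C -> C -> C -> C)
          (dD : D -> seq (D * D)) (eD : D -> F) (chiD : D -> D -> D -> D)
          (dE : E -> seq (E * E)) (eE : E -> F) (chiE : E -> E -> E -> E)
          (f : C -> D) (g : D -> E)
          (Tf : (C -> C) -> (D -> D)) (Tg : (D -> D) -> (E -> E)) (Tgf : (C -> C) -> (E -> E)),
     hopf_heap dC eC chiC -> hopf_heap dD eD chiD -> hopf_heap dE eE chiE ->
     hh_morph dC eC chiC dD eD chiD f -> hh_morph dD eD chiD dE eE chiE g ->
     Tn_map_spec chiC chiD f Tf -> Tn_map_spec chiD chiE g Tg ->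
     Tn_map_spec chiC chiE (fun c => g (f c)) Tgf ->
     forall x, inTn chiC x -> feq (Tgf x) (Tg (Tf x))).
Proof.
split.
  move=> C dC eC chi HH; have [z ez] := exists_counit_one HH; split.
    by exists (comul0 dC chi z), (counit0 eC z); apply: (comul0_spec HH ez).
  by move=> dT eT Hspec; apply: (Tn_bialgebra HH Hspec).
split.
  move=> C dC eC chi th HH Hth; have [z ez] := exists_counit_one HH; split.
    by exists (antipode0 dC chi z); apply: (antipode0_spec HH Hth ez).
  by move=> dT eT S Hspec HS; apply: (Tn_antipode HH Hth ez Hspec HS).
split.
  move=> C D dC eC chiC dD eD chiD f HC HD Hf; have [z ez] := exists_counit_one HC.
  split; first by exists (Tmap0 dC chiD f z); apply: (Tmap0_spec HD Hf ez).
  split; first by move=> T dTC eTC dTD eTD HT HsC HsD; apply: (Tmap_bialg_map HC HD Hf ez HT HsC HsD).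
  by move=> T thC thD SC SD HT HthC HthD HSC HSD; apply: (Tmap_antipode HC HD Hf ez HT HthC HthD HSC HSD).
split; first by move=> C dC eC chi T _ HT; apply: (Tmap_id HT).
move=> C D E dC eC chiC dD eD chiD dE eE chiE f g Tf Tg Tgf _ _ _ _ _ HTf HTg HTgf.
exact: (Tmap_comp HTf HTg HTgf).
Qed.
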